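(* The following are equivalent for any complete theory $T$. (1) $T$ locally trace defines every structure. (2) $T$ is $\infty$-$\mathrm{IP}$. (3) $T$ trace defines the generic $k$-hypergraph $\mathcal{H}_k$ for every $k\ge 2$.
   Context: ''Definable'' means first-order definable with parameters. A $k$-hypergraph is a set with a symmetric $k$-ary relation $E$ such that $E(a_1,\dots,a_k)$ implies the $a_i$ are distinct; $\mathcal{H}_k$ is the Fraïssé limit of the class of finite $k$-hypergraphs. A formula $\varphi(x;y_1,\dots,y_k)$ has the $k$-independence property in a model if there are sequences $(b_{1,i})_{i<\omega},\dots,(b_{k,i})_{i<\omega}$ such that for every $S\subseteq\omega^k$ there is $a_S$ with $\varphi(a_S;b_{1,i_1},\dots,b_{k,i_k})$ holding iff $(i_1,\dots,i_k)\in S$. $T$ is $k$-$\mathrm{NIP}$ if no formula has the $k$-independence property in a model of $T$, $k$-$\mathrm{IP}$ otherwise; $T$ is $\infty$-$\mathrm{IP}$ if it is $k$-$\mathrm{IP}$ for every $k\ge1$. A structure $\mathcal{N}$ trace defines $\mathcal{M}$ if for some $n$ there is $\tau\colon M\to N^n$ such that every $\mathcal{M}$-definable $X\subseteq M^m$ equals $\tau^{-1}(Y)$ for some $\mathcal{N}$-definable $Y\subseteq N^{mn}$. $\mathcal{N}$ locally trace defines $\mathcal{M}$ if there is a possibly infinite collection $\mathcal{E}$ of functions $M\to N$ such that every $\mathcal{M}$-definable subset of $M^m$ is of the form $\{(a_1,\dots,a_m):(f_1(a_{i_1}),\dots,f_n(a_{i_n}))\in Y\}$ with $f_j\in\mathcal{E}$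 and $Y$ $\mathcal{N}$-definable. A theory (locally) trace defines a structure if some model of it does. *)

From mathcomp Require Import all_boot.
From mathcomp Require Import fingroup perm.
Set Implicit Arguments. Unset Strict Implicit. Unset Printing Implicit Defensive.

Record signature := Signature {
  fsym : Type; farity : fsym -> nat;
  rsym : Type; rarity : rsym -> nat }.

Record structure (L : signature) := Structure {
  carrier :> Type;
  carrier_inhabited : inhabited carrier;
  fun_interp : forall f : fsym L, ('I_(farity f) -> carrier) -> carrier;
  rel_interp : forall r : rsym L, ('I_(rarity r) -> carrier) -> Prop }.

Inductive term (L : signature) : Type :=
| tvar : nat -> term L
| tapp : forall f : fsym L, ('I_(farity f) -> term L) -> term L.

Inductive formula (L : signature) : Type :=
| fequal : term L -> term L -> formula L
| frel : forall r : rsym L, ('I_(rarity r) -> term L) -> formula L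
| fneg : formula L -> formula L
| fand : formula L -> formula L -> formula L
| fexists : nat -> formula L -> formula L.

Fixpoint eval_term (L : signature) (M : structure L) (e : nat -> M) (t : term L) : M :=
  match t with
  | tvar i => e i
  | tapp f ts => @fun_interp L M f (fun j => eval_term e (ts j))
  end.

Definition upd (T : Type) (e : nat -> T) (x : nat) (v : T) : nat -> T :=
  fun i => if i == x then v else e i.

Fixpoint sat (L : signature) (M : structure L) (e : nat -> M) (phi : formula L) : Prop :=
  match phi with
  | fequal t u => eval_term e t = eval_term e u
  | frel r ts => @rel_interp L M r (fun j => eval_term e (ts j))
  | fneg p => ~ sat e p
  | fand p q => sat e p /\ sat e q
  | fexists x p => exists v : M, sat (upd e x v) p
  end.

Fixpoint occurs_term (L : signature) (v : nat) (t : term L) : Prop :=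
  match t with
  | tvar i => i = v
  | tapp f ts => exists j, occurs_term v (ts j)
  end.

Fixpoint free_in (L : signature) (v : nat) (phi : formula L) : Prop :=
  match phi with
  | fequal t u => occurs_term v t \/ occurs_term v u
  | frel r ts => exists j, occurs_term v (ts j)
  | fneg p => free_in v p
  | fand p q => free_in v p \/ free_in v q
  | fexists x p => v <> x /\ free_in v p
  end.

Definition sentence (L : signature) (phi : formula L) : Prop :=
  forall v, ~ free_in v phi.

Definition theory (L : signature) := formula L -> Prop.

Definition model (L : signature) (T : theory L) (M : structure L) : Prop :=
  forall phi, T phi -> forall e : nat -> M, sat e phi.

Definition complete_theory (L : signature) (T : theory L) : Prop :=
  (forall phi, T phi -> sentence phi) /\
  (exists M : structure L, model T M) /\
  (forall phi, sentence phi ->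
     (forall M : structure L, model T M -> forall e : nat -> M, sat e phi) \/
     (forall M : structure L, model T M -> forall e : nat -> M, sat e (fneg phi))).

(* A tuple a indexed by a finite type I is plugged into the variables
   0 .. #|I|-1 (via the enumeration of I); all other variables receive
   parameter values from e. *)
Definition tuple_env (L : signature) (M : structure L) (I : finType)
  (a : I -> M) (e : nat -> M) : nat -> M :=
  fun i => match (insub i : option 'I_#|I|) with
           | Some j => a (enum_val j)
           | None => e i
           end.

Definition definable (L : signature) (M : structure L) (I : finType)
  (X : (I -> M) -> Prop) : Prop :=
  exists (phi : formula L) (e : nat -> M),
    forall a : I -> M, X a <-> sat (tuple_env a e) phi.

(* N^{m n} is indexed by 'I_m * 'I_n: coordinate (i,j) of tau(a) is tau(a_i)_j *)
Definition trace_defines (L L' : signature) (N : structure L) (M : structure L') : Prop :=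
  exists (n : nat) (tau : M -> 'I_n -> N),
    forall (m : nat) (X : ('I_m -> M) -> Prop), definable X ->
      exists Y : ('I_m * 'I_n -> N) -> Prop,
        definable Y /\ forall a : 'I_m -> M, X a <-> Y (fun p => tau (a p.1) p.2).

Definition locally_trace_defines (L L' : signature) (N : structure L) (M : structure L') : Prop :=
  exists E : (M -> N) -> Prop,
    forall (m : nat) (X : ('I_m -> M) -> Prop), definable X ->
      exists (n : nat) (f : 'I_n -> M -> N) (idx : 'I_n -> 'I_m) (Y : ('I_n -> N) -> Prop),
        (forall j, E (f j)) /\ definable Y /\
        forall a : 'I_m -> M, X a <-> Y (fun j => f j (a (idx j))).

Definition theory_trace_defines (L L' : signature) (T : theory L) (M : structure L') : Prop :=
  exists N : structure L, model T N /\ trace_defines N M.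

Definition theory_locally_trace_defines (L L' : signature) (T : theory L) (M : structure L') : Prop :=
  exists N : structure L, model T N /\ locally_trace_defines N M.

(* phi(x; y_1, ..., y_k): x is the tuple of variables vx, y_i the tuple vy i;
   all these variables are pairwise distinct and contain the free variables of phi. *)
Definition has_kIP (L : signature) (M : structure L) (k : nat) (phi : formula L) : Prop :=
  exists (nx : nat) (ny : 'I_k -> nat) (vx : 'I_nx -> nat)
         (vy : forall i : 'I_k, 'I_(ny i) -> nat),
    injective vx /\ (forall i, injective (vy i)) /\
    (forall j i j', vx j <> vy i j') /\
    (forall i i' j j', i <> i' -> vy i j <> vy i' j') /\
    (forall v, free_in v phi -> (exists j, v = vx j) \/ (exists i j, v = vy i j)) /\
    exists b : forall i : 'I_k, nat -> 'I_(ny i) -> M,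
      forall S : ('I_k -> nat) -> Prop,
        exists a : 'I_nx -> M,
          forall (s : 'I_k -> nat) (e : nat -> M),
            (forall j, e (vx j) = a j) ->
            (forall i j, e (vy i j) = b i (s i) j) ->
            (sat e phi <-> S s).

Definition k_IP (L : signature) (T : theory L) (k : nat) : Prop :=
  exists (M : structure L) (phi : formula L), model T M /\ has_kIP M k phi.

Definition infinite_IP (L : signature) (T : theory L) : Prop :=
  forall k, 1 <= k -> k_IP T k.

Fixpoint in_list (T : Type) (x : T) (s : seq T) : Prop :=
  match s with [::] => False | y :: s' => y = x \/ in_list x s' end.

Definition hypergraph_sig (k : nat) : signature :=
  {| fsym := Empty_set; farity := fun _ => 0; rsym := unit; rarity := fun _ => k |}.

Definition hedge (k : nat) (H : structure (hypergraph_sig k)) (a : 'I_k -> H) : Prop :=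
  @rel_interp (hypergraph_sig k) H tt a.
Arguments hedge {k} H a.

Definition is_khypergraph (k : nat) (V : Type) (R : ('I_k -> V) -> Prop) : Prop :=
  (forall a, R a -> injective a) /\
  (forall a (s : {perm 'I_k}), R a -> R (a \o s)).

(* Fraisse limit of the class of finite k-hypergraphs: a countable
   k-hypergraph whose age is exactly the class of finite k-hypergraphs
   (its finite substructures are k-hypergraphs since it is one, and every
   finite k-hypergraph embeds) and which is ultrahomogeneous. *)
Definition generic_hypergraph (k : nat) (H : structure (hypergraph_sig k)) : Prop :=
  is_khypergraph (hedge H) /\
  (exists f : H -> nat, injective f) /\
  (forall (V : finType) (R : ('I_k -> V) -> Prop), is_khypergraph R ->
     exists g : V -> H, injective g /\ forall a, R a <-> hedge H (g \o a)) /\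
  (forall (A : H -> Prop) (p : H -> H),
     (exists s : list H, forall x, A x <-> in_list x s) ->
     (forall x y, A x -> A y -> p x = p y -> x = y) ->
     (forall a : 'I_k -> H, (forall j, A (a j)) -> (hedge H a <-> hedge H (p \o a))) ->
     exists sigma : H -> H, bijective sigma /\ (forall x, A x -> sigma x = p x) /\
       forall a : 'I_k -> H, hedge H a <-> hedge H (sigma \o a)).

From Pilot Require Import Defs.
From mathcomp Require Import all_boot fingroup perm.
From mathcomp Require Import boolp classical_sets filter.
Set Implicit Arguments. Unset Strict Implicit. Unset Printing Implicit Defensive.

(* A formula phi(x; y_1, ..., y_k) with the k-independence property, read with an
   arbitrary index set A in place of omega, codes every k-ary relation S on A:
   the coordinates are sent to the elements b_(i, t) and S to the parameter a_S.

   (2) -> (1): finite patterns ['I_l] transfer between models of the complete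
   theory, and an ultrapower over the finite subsets of A glues them into a
   pattern indexed by A.  With A the universe of M, a k-ary X of M is traced by
   sending the i-th coordinate of a tuple to b_(i, a_i), with parameter a_X.

   (2) -> (3): the generic k-hypergraph is ultrahomogeneous, so a definable set
   is a union of quantifier-free types over its parameters, and it suffices to
   trace equality and the edge relation.  With vertices identified with naturals
   and a pattern for k - 1, v is sent to a_(S v) and the b_(i, v), where S v is
   the set of (k - 1)-tuples forming an edge together with v.

   (1) -> (2) and (3) -> (2): trace the relation "x_0 codes a set containing
   (x_1, ..., x_k)", in a structure made for this purpose, respectively in the
   finite parts of the generic (k+1)-hypergraph followed by compactness. *)

Section InList.
Variables (A : Type) (B : eqType).

Lemma in_list_mapP (C : Type) (f : A -> C) (l : seq A) y :
  in_list y (map f l) <-> exists x, in_list x l /\ f x = y.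
Proof.
elim: l => [|x l IH] /=; first by split=> // -[x []].
split=> [[<-|/IH [x' [H1 H2]]]|[x' [[<-|H1] H2]]]; [by exists x; split; [left|]| |by left|].
  by exists x'; split=> //; right.
by right; apply/IH; exists x'.
Qed.

Lemma mem_map_in_list (f : A -> B) (l : seq A) y :
  y \in map f l <-> exists x, in_list x l /\ y = f x.
Proof.
elim: l => [|x l IH] /=; first by split=> // -[x []].
rewrite in_cons; split.
  case/orP=> [/eqP ->|/IH [x' [H1 H2]]]; first by exists x; split=> //; left.
  by exists x'; split=> //; right.
case=> x' [[<-|H1] H2]; first by rewrite H2 eqxx.
by apply/orP; right; apply/IH; exists x'.
Qed.

Lemma in_list_filter (p : pred A) (l : seq A) x :
  in_list x (seq.filter p l) <-> in_list x l /\ p x.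
Proof.
elim: l => [|y l IH] /=; first by split=> // -[].
case py: (p y) => /=; rewrite IH.
  by split=> [[<-|[]]|[[<-|] ?]]; tauto.
by split=> [|[[<-|]]]; [tauto|rewrite py|tauto].
Qed.

Lemma mem_map_filter (f : A -> B) (p : pred A) (l : seq A) y :
  y \in map f (seq.filter p l) <-> exists x, in_list x l /\ p x /\ y = f x.
Proof.
rewrite mem_map_in_list.
split=> [[x [/in_list_filter [H1 H2] ->]]|[x [H1 [H2 ->]]]]; exists x => //.
by split=> //; apply/in_list_filter.
Qed.

Lemma in_list_cat (x : A) s t : in_list x (s ++ t) <-> in_list x s \/ in_list x t.
Proof. by elim: s => [|y s IH] /=; [tauto|rewrite IH; tauto]. Qed.

Lemma in_list_map (f : B -> A) (l : seq B) k : k \in l -> in_list (f k) (map f l).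
Proof.
by elim: l => [|y l IH] //=; rewrite in_cons => /orP [/eqP ->|/IH]; [left|right].
Qed.

End InList.

(** * Renaming, substitution and uniform definability *)

Section Syntax.
Variable L : signature.

Fixpoint ren_term (rho : nat -> nat) (t : term L) : term L :=
  match t with
  | tvar i => tvar L (rho i)
  | tapp f ts => tapp (fun j => ren_term rho (ts j))
  end.

Fixpoint ren (rho : nat -> nat) (phi : formula L) : formula L :=
  match phi with
  | fequal t u => fequal (ren_term rho t) (ren_term rho u)
  | Defs.frel r ts => @Defs.frel L r (fun j => ren_term rho (ts j))
  | fneg p => fneg (ren rho p)
  | fand p q => fand (ren rho p) (ren rho q)
  | fexists x p => fexists (rho x) (ren rho p)
  end.

Lemma eval_ren (M : structure L) (E : nat -> M) rho t :
  eval_term E (ren_term rho t) = eval_term (E \o rho) t.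
Proof. by elim: t => [i|f ts IH] //=; congr fun_interp; apply: funext => j. Qed.

Lemma sat_ren (M : structure L) rho (phi : formula L) : injective rho ->
  forall E : nat -> M, sat E (ren rho phi) <-> sat (E \o rho) phi.
Proof.
move=> rho_inj; elim: phi => [t u|r ts|p IH|p IHp q IHq|x p IH] E /=.
- by rewrite !eval_ren.
- by under eq_fun do rewrite eval_ren.
- by rewrite IH.
- by rewrite IHp IHq.
- have upd_ren v : upd E (rho x) v \o rho = upd (E \o rho) x v.
    by apply: funext => w; rewrite /upd /= (inj_eq rho_inj).
  by split=> -[v Hv]; exists v; move: Hv; rewrite IH upd_ren.
Qed.

Fixpoint fexists_seq (vs : seq nat) (phi : formula L) : formula L :=
  if vs is v :: vs' then fexists v (fexists_seq vs' phi) else phi.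

Definition override (T : Type) (E : nat -> T) (vs : seq nat) (g : nat -> T) :=
  fun v => if v \in vs then g v else E v.

Lemma sat_fexists_seq (M : structure L) vs phi (E : nat -> M) :
  sat E (fexists_seq vs phi) <-> exists g, sat (override E vs g) phi.
Proof.
elim: vs E => [|v vs IH] E /=.
  have overrideE g : override E [::] g = E by apply: funext.
  by split=> [h|[g]]; [exists E|]; rewrite overrideE.
split=> [[a]|[g Hg]].
  rewrite IH => -[g Hg]; exists (fun w => if w \in vs then g w else a).
  move: Hg; congr sat; apply: funext => w; rewrite /override /upd in_cons.
  by case: (w \in vs); case: (w == v); rewrite ?orbT.
exists (g v); rewrite IH; exists g; move: Hg; congr sat.
apply: funext => w; rewrite /override /upd in_cons.
by case: (w \in vs); case: eqP => [->|]; rewrite ?orbT.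
Qed.

Definition ftrue : formula L := fequal (tvar L 0) (tvar L 0).
Definition ffalse : formula L := fneg ftrue.
Definition bigand (l : seq (formula L)) := foldr (@fand L) ftrue l.

Lemma sat_bigand (M : structure L) (T : eqType) (F : T -> formula L) (l : seq T)
    (E : nat -> M) :
  sat E (bigand (map F l)) <-> (forall x, x \in l -> sat E (F x)).
Proof.
elim: l => [|x l IH] /=; first by split.
rewrite IH; split=> [[H1 H2] y|H]; first by rewrite in_cons => /orP [/eqP ->|]; [|exact: H2].
by split=> [|y yl]; apply: H; rewrite in_cons ?eqxx ?yl ?orbT.
Qed.

Lemma sat_bigand_enum (M : structure L) (T : finType) (F : T -> formula L) (E : nat -> M) :
  sat E (bigand (map F (enum T))) <-> (forall x, sat E (F x)).
Proof. by rewrite sat_bigand; split=> H x; [apply: H; rewrite mem_enum|]. Qed.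

Lemma eval_term_free (M : structure L) (E E' : nat -> M) t :
  (forall v, occurs_term v t -> E v = E' v) -> eval_term E t = eval_term E' t.
Proof.
elim: t => [i|f ts IH] /= H; first exact: H.
by congr fun_interp; apply: funext => j; apply: IH => v Hv; apply: H; exists j.
Qed.

Lemma sat_free (M : structure L) (phi : formula L) (E E' : nat -> M) :
  (forall v, free_in v phi -> E v = E' v) -> (sat E phi <-> sat E' phi).
Proof.
elim: phi E E' => [t u|r ts|p IH|p IHp q IHq|x p IH] E E' /= H.
- by rewrite (@eval_term_free _ E E' t) ?(@eval_term_free _ E E' u) // => v Hv;
    apply: H; [right|left].
- have -> // : (fun j => eval_term E (ts j)) = (fun j => eval_term E' (ts j)).
  by apply: funext => j; apply: eval_term_free => v Hv; apply: H; exists j.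
- by rewrite (IH E E').
- by rewrite (IHp E E') ?(IHq E E') // => v Hv; apply: H; [right|left].
- split=> -[a Ha]; exists a; move: Ha; rewrite (IH _ (upd E' x a)) // => v Hv;
    rewrite /upd; case: eqP => // /eqP nvx; apply: H; split=> //; exact/eqP.
Qed.

Fixpoint maxvar_term (t : term L) : nat :=
  match t with tvar i => i | tapp f ts => \max_(j < farity f) maxvar_term (ts j) end.

Fixpoint maxvar (phi : formula L) : nat :=
  match phi with
  | fequal t u => maxn (maxvar_term t) (maxvar_term u)
  | Defs.frel r ts => \max_(j < rarity r) maxvar_term (ts j)
  | fneg p => maxvar p
  | fand p q => maxn (maxvar p) (maxvar q)
  | fexists x p => maxn x (maxvar p)
  end.

Lemma occurs_maxvar v t : occurs_term v t -> v <= maxvar_term t.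
Proof.
elim: t => [i|f ts IH] /=; first by move->.
by move=> [j /IH Hj]; apply: leq_trans Hj _; exact: (leq_bigmax j).
Qed.

Lemma free_maxvar v phi : free_in v phi -> v <= maxvar phi.
Proof.
elim: phi => [t u|r ts|p IH|p IHp q IHq|x p IH] /=.
- by case=> /occurs_maxvar H; rewrite leq_max H ?orbT.
- by move=> [j /occurs_maxvar Hj]; apply: leq_trans Hj _; exact: (leq_bigmax j).
- exact: IH.
- by case=> [/IHp|/IHq] H; rewrite leq_max H ?orbT.
- by move=> [_ /IH H]; rewrite leq_max H orbT.
Qed.

Lemma free_fexists_seq v vs phi :
  free_in v (fexists_seq vs phi) -> v \notin vs /\ free_in v phi.
Proof.
elim: vs => [|w vs IH] //= [nvw /IH [H1 H2]]; split=> //.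
by rewrite in_cons negb_or H1 andbT; apply/eqP.
Qed.

Definition close (phi : formula L) := fexists_seq (iota 0 (maxvar phi).+1) phi.

Lemma close_sentence phi : sentence (close phi).
Proof.
move=> v /free_fexists_seq [H1 /free_maxvar H2].
by move: H1; rewrite mem_iota /= add0n ltnS H2.
Qed.

(* A tuple indexed by a finite type [J] lives in the variables [pos j], as in [tuple_env]. *)
Definition pos (J : finType) (j : J) : nat := enum_rank j.

Lemma pos_inj (J : finType) : injective (@pos J).
Proof. by move=> x y /val_inj /enum_rank_inj. Qed.

Lemma pos_lt (J : finType) (j : J) : pos j < #|J|.
Proof. exact: ltn_ord. Qed.

Lemma tuple_env_pos (M : structure L) (I : finType) (a : I -> M) e (i : I) :
  tuple_env a e (pos i) = a i.
Proof. by rewrite /tuple_env /pos valK enum_rankK. Qed.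

Lemma tuple_env_big (M : structure L) (I : finType) (a : I -> M) e v :
  #|I| <= v -> tuple_env a e v = e v.
Proof. by move=> H; rewrite /tuple_env insubF // ltnNge H. Qed.

Lemma env_extend (M : Type) (J : finType) (vs : J -> nat) : injective vs ->
  forall (z : J -> M) (E0 : nat -> M), exists E : nat -> M, forall j, E (vs j) = z j.
Proof.
move=> vs_inj z E0; exists (fun v => if [pick j | vs j == v] is Some j then z j else E0 v) => j.
by case: pickP => [j' /eqP /vs_inj -> //|/(_ j)]; rewrite eqxx.
Qed.


Definition defines_at (M : structure L) (J : finType) (vs : J -> nat) (phi : formula L)
  (Z : (J -> M) -> Prop) := forall E : nat -> M, sat E phi <-> Z (E \o vs).

(* The equations [W + vs j = h j] rename [vs j] into [h j]; the shift by [W]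
   keeps the bound copies apart from every [h j], so no capture can occur. *)
Definition subst_vars (J : finType) (vs : J -> nat) (h : J -> nat) (phi : formula L) :=
  let W := (\max_(j : J) h j).+1 in
  fexists_seq [seq W + vs j | j <- enum J]
    (fand (bigand [seq fequal (tvar L (W + vs j)) (tvar L (h j)) | j <- enum J])
          (ren (addn W) phi)).

Lemma sat_subst_vars (M : structure L) (J : finType) (vs h : J -> nat) phi
    (Z : (J -> M) -> Prop) :
  injective vs -> defines_at vs phi Z ->
  forall E, sat E (subst_vars vs h phi) <-> Z (E \o h).
Proof.
move=> vs_inj phiZ E; rewrite /subst_vars sat_fexists_seq.
set W := (\max_(j : J) h j).+1; set us := [seq W + vs j | j <- enum J].
have h_notin j : (h j \in us) = false.
  apply/negP => /mapP [j' _ Hj].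
  by move: (leq_bigmax j : h j <= W.-1); rewrite Hj /= leqNgt ltnS leq_addr.
have us_in j : (W + vs j) \in us by apply: map_f; rewrite mem_enum.
have addW_inj : injective (addn W) by move=> a b /eqP; rewrite eqn_add2l => /eqP.
split=> [[g /= [Heq Hren]]|HZ].
  move: Heq Hren; rewrite sat_bigand sat_ren // phiZ => Heq; congr Z.
  apply: funext => j /=; have := Heq j; rewrite mem_enum => /(_ isT) /=.
  by rewrite /override h_notin.
have [g gE] := env_extend (vs := fun j => W + vs j) (inj_comp addW_inj vs_inj) (fun j => E (h j)) E.
exists g; split; first by rewrite sat_bigand => j _ /=; rewrite /override us_in h_notin gE.
rewrite sat_ren // phiZ; move: HZ; congr Z.
by apply: funext => j /=; rewrite /override us_in gE.
Qed.

Definition udefinable (J : finType) (Z : forall M : structure L, (J -> M) -> Prop) :=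
  exists phi, forall M : structure L, defines_at (@pos J) phi (Z M).

Lemma udefinable_ext (J : finType) (Z Z' : forall M : structure L, (J -> M) -> Prop) :
  (forall M z, Z M z <-> Z' M z) -> udefinable Z -> udefinable Z'.
Proof. by move=> ZZ' [phi phiZ]; exists phi => M E; rewrite phiZ ZZ'. Qed.

Lemma udefinable_comp (I J : finType) (g : J -> I) (Z : forall M : structure L, (J -> M) -> Prop) :
  udefinable Z -> udefinable (fun M (a : I -> M) => Z M (a \o g)).
Proof.
move=> [phi phiZ]; exists (subst_vars (@pos J) (fun j => pos (g j)) phi) => M E.
exact: (sat_subst_vars _ (@pos_inj J) (phiZ M)).
Qed.

Lemma udefinable_const (J : finType) (Q : Prop) : udefinable (fun M (_ : J -> M) => Q).
Proof. by have [q|nq] := pselect Q; [exists ftrue|exists ffalse] => M E /=; split. Qed.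

Lemma udefinable_neg (J : finType) (Z : forall M : structure L, (J -> M) -> Prop) :
  udefinable Z -> udefinable (fun M z => ~ Z M z).
Proof. by move=> [phi phiZ]; exists (fneg phi) => M E /=; rewrite phiZ. Qed.

Lemma udefinable_and (J : finType) (Z Z' : forall M : structure L, (J -> M) -> Prop) :
  udefinable Z -> udefinable Z' -> udefinable (fun M z => Z M z /\ Z' M z).
Proof.
by move=> [phi phiZ] [psi psiZ']; exists (fand phi psi) => M E /=; rewrite phiZ psiZ'.
Qed.

Lemma udefinable_forall (J K : finType) (Z : K -> forall M : structure L, (J -> M) -> Prop) :
  (forall k, udefinable (Z k)) -> udefinable (fun M z => forall k, Z k M z).
Proof.
move=> /choice [F FZ]; exists (bigand (map F (enum K))) => M E.
by rewrite sat_bigand_enum; split=> H k; [rewrite -FZ|rewrite FZ].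
Qed.

Lemma udefinable_exists_fin (J K : finType) (Z : K -> forall M : structure L, (J -> M) -> Prop) :
  (forall k, udefinable (Z k)) -> udefinable (fun M z => exists k, Z k M z).
Proof.
move=> Zk.
apply: udefinable_ext (udefinable_neg (udefinable_forall (fun k => udefinable_neg (Zk k)))).
by move=> M z; split=> [/existsNP [k /contrapT Zkz]|[k Zkz] /(_ k)]; [exists k|].
Qed.

Lemma udefinable_exists (I K : finType) (Z : forall M : structure L, ((I + K)%type -> M) -> Prop) :
  udefinable Z -> udefinable (fun M a =>
    exists u : K -> M, Z M (fun x => match x with inl i => a i | inr k => u k end)).
Proof.
move=> [phi phiZ].
pose h (x : (I + K)%type) := match x with inl i => pos i | inr k => #|I| + pos k end.
set us := [seq #|I| + pos k | k <- enum K].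
exists (fexists_seq us (subst_vars (@pos (I + K)%type) h phi)) => M E; rewrite sat_fexists_seq.
have pos_notin (i : I) : (pos i \in us) = false.
  by apply/negP => /mapP [k _ Hk]; move: (pos_lt i); rewrite Hk ltnNge leq_addr.
have shift_in (k : K) : (#|I| + pos k) \in us by apply: map_f; rewrite mem_enum.
split=> [[g]|[u Hu]].
  rewrite (sat_subst_vars _ (@pos_inj _) (phiZ M)) => H; exists (fun k => g (#|I| + pos k)).
  by move: H; congr (Z M); apply: funext => -[i|k] /=; rewrite /override ?pos_notin ?shift_in.
have [g gE] := env_extend (vs := fun k => #|I| + pos k) (inj_comp (@addnI _) (@pos_inj K)) u E.
exists g; rewrite (sat_subst_vars _ (@pos_inj _) (phiZ M)); move: Hu; congr (Z M).
by apply: funext => -[i|k] /=; rewrite /override ?pos_notin ?shift_in ?gE.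
Qed.

Lemma udefinable_sat (J : finType) (vs : J -> nat) (phi : formula L) :
  injective vs -> (forall v, free_in v phi -> exists j, v = vs j) ->
  udefinable (fun M (z : J -> M) => forall E, (forall j, E (vs j) = z j) -> sat E phi).
Proof.
move=> vs_inj phi_vs; exists (subst_vars vs (@pos J) phi) => M.
apply: sat_subst_vars => // E /=; split=> [H E' HE'|H]; last exact: H.
by rewrite (sat_free (E' := E)) // => v /phi_vs [j ->]; rewrite HE'.
Qed.

Lemma udefinable_sentence (Z : forall M : structure L, Prop) :
  udefinable (fun M (_ : void -> M) => Z M) ->
  exists psi, sentence psi /\ forall (M : structure L) (e : nat -> M), sat e psi <-> Z M.
Proof.
move=> [phi phiZ]; exists (close phi); split=> [|M e]; first exact: close_sentence.
rewrite sat_fexists_seq; split=> [[g]|HZ]; first by rewrite phiZ.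
by exists e; rewrite phiZ.
Qed.

Lemma definable_of_udefinable (M : structure L) (I : finType)
    (Z : forall M : structure L, (I -> M) -> Prop) :
  udefinable Z -> definable (Z M).
Proof.
case: (carrier_inhabited M) => x0 [phi phiZ]; exists phi, (fun _ => x0) => a.
rewrite phiZ (_ : tuple_env a _ \o _ = a) //.
by apply: funext => i /=; exact: tuple_env_pos.
Qed.

Lemma definable_of_udefinable_par (M : structure L) (I K : finType) (c : K -> M)
    (Z : forall M : structure L, ((I + K)%type -> M) -> Prop) :
  udefinable Z ->
  definable (fun a : I -> M => Z M (fun x => match x with inl i => a i | inr k => c k end)).
Proof.
case: (carrier_inhabited M) => x0 [phi phiZ].
pose h (x : (I + K)%type) := match x with inl i => pos i | inr k => #|I| + pos k end.
have [e eE] := env_extend (vs := fun k => #|I| + pos k) (inj_comp (@addnI _) (@pos_inj K)) c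
  (fun _ => x0).
exists (subst_vars (@pos _) h phi), e => a.
rewrite (sat_subst_vars _ (@pos_inj _) (phiZ M)).
suff -> : tuple_env a e \o h = (fun x => match x with inl i => a i | inr k => c k end) by [].
apply: funext => -[i|k] /=; first exact: tuple_env_pos.
by rewrite tuple_env_big ?leq_addr ?eE.
Qed.

End Syntax.

(** * Ultrapowers *)

Section Ultrapower.
Variables (L : signature) (N : structure L) (I : Type) (U : set_system I).
Hypothesis U_ultra : UltraFilter U.

(* The classes of equality [U]-almost everywhere, represented as predicates. *)
Definition ueq (h : I -> N) : (I -> N) -> Prop := fun h' => U (fun i => h i = h' i).
Definition ultraclass := {P : (I -> N) -> Prop | exists h, P = ueq h}.
Definition uclass (h : I -> N) : ultraclass := exist _ (ueq h) (ex_intro _ h erefl).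
Definition urepr (q : ultraclass) : I -> N := projT1 (cid (proj2_sig q)).

Lemma ureprK q : uclass (urepr q) = q.
Proof.
case: q => P HP; apply: eq_exist; rewrite /urepr /=.
by case: (cid _) => h /= ->.
Qed.

Lemma uclass_eq h h' : uclass h = uclass h' <-> U (fun i => h i = h' i).
Proof.
split=> [/(f_equal (@proj1_sig _ _)) /= e|H].
  have : ueq h h by apply: filterE.
  by rewrite e /ueq => H; apply: (filterS _ H) => i ->.
apply: eq_exist; apply: funext => g; apply: propext; rewrite /ueq.
by split=> H'; apply: (filterS2 _ _ H H') => i -> ->.
Qed.

Lemma urepr_uclass h : U (fun i => urepr (uclass h) i = h i).
Proof. by apply/uclass_eq; rewrite ureprK. Qed.

Definition ultrapower : structure L :=
  @Structure L ultraclass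
    (let: inhabits x := carrier_inhabited N in inhabits (uclass (fun _ => x)))
    (fun f args => uclass (fun i => @fun_interp L N f (fun j => urepr (args j) i)))
    (fun r args => U (fun i => @rel_interp L N r (fun j => urepr (args j) i))).

Lemma los_eval_term (G : nat -> I -> N) (t : term L) :
  eval_term (M := ultrapower) (fun v => uclass (G v)) t =
  uclass (fun i => eval_term (fun v => G v i) t).
Proof.
elim: t => [v|f ts IH] //=; apply/uclass_eq.
have : U (fun i => forall j, urepr (eval_term (M := ultrapower) (fun v => uclass (G v)) (ts j)) i
                         = eval_term (fun v => G v i) (ts j)).
  by apply: filter_forall => j; rewrite IH; exact: urepr_uclass.
by apply: filterS => i H; congr fun_interp; apply: funext => j; exact: H.
Qed.

Lemma los (phi : formula L) (G : nat -> I -> N) :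
  sat (M := ultrapower) (fun v => uclass (G v)) phi <-> U (fun i => sat (fun v => G v i) phi).
Proof.
elim: phi G => [t u|r ts|p IH|p IHp q IHq|x p IH] G /=.
- by rewrite !los_eval_term uclass_eq.
- have args_ae : U (fun i => (fun j => urepr (eval_term (M := ultrapower)
      (fun v => uclass (G v)) (ts j)) i) = (fun j => eval_term (fun v => G v i) (ts j))).
    have : U (fun i => forall j, urepr (eval_term (M := ultrapower)
        (fun v => uclass (G v)) (ts j)) i = eval_term (fun v => G v i) (ts j)).
      by apply: filter_forall => j; rewrite los_eval_term; exact: urepr_uclass.
    by apply: filterS => i H; apply: funext.
  by split=> H; apply: (filterS2 _ _ args_ae H) => i ->.
- rewrite IH; split=> [H|H H'].
    by case: (in_ultra_setVsetC (fun i => sat (fun v => G v i) p) U_ultra) => // /H.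
  by apply: (@filter_const _ U _ False); apply: (filterS2 _ _ H H') => i.
- rewrite IHp IHq; split=> [[H1 H2]|H]; first exact: (filterS2 _ _ H1 H2).
  by split; apply: (filterS _ H) => i [].
- have updE (h : I -> N) :
      upd (fun v => uclass (G v)) x (uclass h) = (fun v => uclass (upd G x h v)).
    by apply: funext => w; rewrite /upd; case: (w == x).
  have updi (h : I -> N) i : (fun v => upd G x h v i) = upd (fun v => G v i) x (h i).
    by apply: funext => w; rewrite /upd; case: (w == x).
  split=> [[q]|H].
    rewrite -(ureprK q) updE IH; apply: filterS => i.
    by rewrite updi => Hi; exists (urepr q i).
  pose h i := if pselect (exists a, sat (upd (fun v => G v i) x a) p) is left H
              then projT1 (cid H) else G x i.
  exists (uclass h); rewrite updE IH; apply: (filterS _ H) => i Hi; rewrite updi /h.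
  by case: pselect => // H'; case: (cid _).
Qed.

Lemma los_env (phi : formula L) (E : nat -> ultrapower) :
  sat E phi <-> U (fun i => sat (fun v => urepr (E v) i) phi).
Proof.
rewrite -los (_ : (fun v => uclass (urepr (E v))) = E) //.
by apply: funext => v; rewrite ureprK.
Qed.

Lemma ultrapower_model (T : theory L) : model T N -> model T ultrapower.
Proof. by move=> MT phi Tphi E; rewrite los_env; apply: filterE => i; exact: MT. Qed.

End Ultrapower.

(** * Independence patterns *)

(* A formula phi(x; y_1, ..., y_k) with its variables split as in [has_kIP]. *)
Unset Implicit Arguments.
Record pformula (L : signature) (k : nat) := PFormula {
  pnx : nat;
  pny : 'I_k -> nat;
  pvx : 'I_pnx -> nat;
  pvy : forall i : 'I_k, 'I_(pny i) -> nat;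
  pphi : formula L;
  pfree : forall v, free_in v pphi -> (exists j, v = pvx j) \/ (exists i j, v = pvy i j);
  pinj : injective (fun x : ('I_pnx + {i : 'I_k & 'I_(pny i)})%type =>
           match x with inl j => pvx j | inr p => pvy (tag p) (tagged p) end) }.
Set Implicit Arguments.
Arguments pnx {L k} p.
Arguments pny {L k} p i.
Arguments pvx {L k} p j.
Arguments pvy {L k} p i j.
Arguments pphi {L k} p.

Section PFormula.
Variables (L : signature) (k : nat) (P : pformula L k).

Definition pvars : finType := ('I_(pnx P) + {i : 'I_k & 'I_(pny P i)})%type.

Definition pvar (x : pvars) : nat :=
  match x with inl j => pvx P j | inr p => pvy P (tag p) (tagged p) end.

Lemma pvar_inj : injective pvar.
Proof. exact: pinj P. Qed.

Lemma pvar_free v : free_in v (pphi P) -> exists x, v = pvar x.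
Proof. by case/pfree => [[j ->]|[i [j ->]]]; [exists (inl j)|exists (inr (existT _ i j))]. Qed.

Definition psat (M : structure L) (z : pvars -> M) :=
  forall E, (forall x, E (pvar x) = z x) -> sat E (pphi P).

Lemma psatE (M : structure L) (z : pvars -> M) (E : nat -> M) :
  (forall x, E (pvar x) = z x) -> (psat z <-> sat E (pphi P)).
Proof.
move=> Ez; split=> [H|H E' E'z]; first exact: H.
by rewrite (sat_free (E' := E)) // => v /pvar_free [x ->]; rewrite Ez E'z.
Qed.

Lemma udefinable_psat : udefinable (@psat).
Proof. exact: udefinable_sat pvar_inj pvar_free. Qed.

Definition pvalue (M A : Type) (a : 'I_(pnx P) -> M) (b : forall i, A -> 'I_(pny P i) -> M)
    (s : 'I_k -> A) (x : pvars) : M :=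
  match x with inl j => a j | inr p => b (tag p) (s (tag p)) (tagged p) end.

(* [P] has the k-independence property in [M] with the index set [A] in place of omega. *)
Definition ip_pattern (M : structure L) (A : Type) :=
  exists b : forall i, A -> 'I_(pny P i) -> M,
    forall S : ('I_k -> A) -> Prop, exists a : 'I_(pnx P) -> M,
      forall s, psat (pvalue a b s) <-> S s.

Lemma ip_pattern_inj (M : structure L) (A B : Type) (f : B -> A) :
  injective f -> ip_pattern M A -> ip_pattern M B.
Proof.
move=> f_inj [b Hb]; exists (fun i t j => b i (f t) j) => S.
have [a Ha] := Hb (fun s => exists t, S t /\ forall i, s i = f (t i)).
exists a => t; rewrite (Ha (fun i => f (t i))); split=> [[t' [St' e]]|St]; last by exists t.
by rewrite (_ : t = t') //; apply: funext => i; apply: f_inj.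
Qed.

End PFormula.
Arguments psat {L k} P {M} z.

Lemma has_kIP_of_ip_pattern (L : signature) (k : nat) (M : structure L) (P : pformula L k) :
  ip_pattern P M nat -> has_kIP M k (pphi P).
Proof.
move=> [b Hb]; exists (pnx P), (pny P), (pvx P), (pvy P).
have inj := @pvar_inj L k P.
split; first by move=> j j' /(inj (inl j) (inl j')) [].
split; first by move=> i j j' e; have [] := inj (inr (existT _ i j)) (inr (existT _ i j')) e;
  exact: existT_inj2.
split; first by move=> j i j' /(inj (inl j) (inr (existT _ i j'))).
split; first by move=> i i' j j' nii /(inj (inr (existT _ i j)) (inr (existT _ i' j'))) [].
split; first exact: pfree.
exists b => S; have [a Ha] := Hb S; exists a => s E Ea Eb.
by rewrite -Ha (psatE (E := E)) // => -[j|[i j]] /=.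
Qed.

Lemma vars_inj (k nx : nat) (ny : 'I_k -> nat) (vx : 'I_nx -> nat)
    (vy : forall i : 'I_k, 'I_(ny i) -> nat) :
  injective vx -> (forall i, injective (vy i)) -> (forall j i j', vx j <> vy i j') ->
  (forall i i' j j', i <> i' -> vy i j <> vy i' j') ->
  injective (fun x : ('I_nx + {i : 'I_k & 'I_(ny i)})%type =>
    match x with inl j => vx j | inr p => vy (tag p) (tagged p) end).
Proof.
move=> vx_inj vy_inj vxy vyy [j|[i j]] [j'|[i' j']] //= e.
- by rewrite (vx_inj _ _ e).
- by case: (vxy _ _ _ e).
- by case: (vxy _ _ _ (esym e)).
- have [eii|nii] := eqVneq i i'; last by case: (vyy _ _ _ _ (elimN eqP nii) e).
  by subst i'; rewrite (vy_inj _ _ _ e).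
Qed.

Lemma ip_pattern_of_has_kIP (L : signature) (M : structure L) k phi :
  has_kIP M k phi -> exists P : pformula L k, ip_pattern P M nat.
Proof.
move=> [nx [ny [vx [vy [vx_inj [vy_inj [vxy [vyy [phi_vars [b Hb]]]]]]]]]].
pose P := @PFormula L k nx ny vx vy phi phi_vars (vars_inj vx_inj vy_inj vxy vyy).
exists P, b => S; have [a Ha] := Hb S; exists a => s.
case: (carrier_inhabited M) => x0.
have [E HE] := env_extend (@pvar_inj L k P) (pvalue (P := P) a b s) (fun _ => x0).
by rewrite (psatE HE); apply: Ha => [j|i j]; [exact: (HE (inl j))|exact: (HE (inr (existT _ i j)))].
Qed.

Lemma los_psat (L : signature) (N : structure L) (I : Type) (U : set_system I)
    (U_ultra : UltraFilter U) k (P : pformula L k) (G : pvars P -> I -> N) :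
  psat P (M := ultrapower N U) (fun x => uclass U (G x)) <->
  U (fun i => psat P (fun x => G x i)).
Proof.
case: (carrier_inhabited N) => y0.
have [E HE] := env_extend (@pvar_inj L k P) G (fun _ _ => y0).
rewrite (psatE (M := ultrapower N U) (E := fun v => uclass U (E v))) => [|x]; last by rewrite HE.
rewrite los //; split; apply: filterS => i; rewrite (psatE (E := fun v => E v i)) //;
  by move=> x; rewrite HE.
Qed.


Section ListIndex.
Variable A : Type.

Fixpoint in_list_pos (F : seq A) (a : A) : nat :=
  if F is x :: F' then (if pselect (x = a) then 0 else (in_list_pos F' a).+1) else 0.

Lemma in_list_pos_lt F a : in_list a F -> in_list_pos F a < size F.
Proof. by elim: F => [|x F IH] //= [->|/IH]; case: pselect. Qed.

Lemma in_list_pos_inj F a a' :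
  in_list a F -> in_list a' F -> in_list_pos F a = in_list_pos F a' -> a = a'.
Proof.
elim: F => [|x F IH] //= Ha Ha'.
case: pselect => [xa|nxa]; case: pselect => [xa'|nxa'] //.
- by move=> _; rewrite -xa -xa'.
- by case=> e; apply: IH => //; [case: Ha|case: Ha'].
Qed.

Definition in_list_ord (F : seq A) (a : A) : 'I_(size F).+1 := inord (in_list_pos F a).

Lemma in_list_ord_inj F a a' :
  in_list a F -> in_list a' F -> in_list_ord F a = in_list_ord F a' -> a = a'.
Proof.
move=> Ha Ha' /(f_equal val); rewrite /= !inordK; first exact: in_list_pos_inj.
  by apply: ltnW; apply: in_list_pos_lt.
by apply: ltnW; apply: in_list_pos_lt.
Qed.

End ListIndex.

(* An ultrapower over the finite subsets of [A], coded as lists, glues the finite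
   patterns indexed by ['I_l] into one indexed by [A]: the index of [a] at
   coordinate [F] is the position of [a] in [F]. *)
Lemma ip_pattern_ultrapower (L : signature) (N : structure L) (A : Type) (U : set_system (seq A))
    (U_ultra : UltraFilter U) k (P : pformula L k) :
  (forall F0, U (fun F => forall x, in_list x F0 -> in_list x F)) ->
  (forall l, ip_pattern P N 'I_l) -> ip_pattern P (ultrapower N U) A.
Proof.
move=> U_cofinal fin_pattern.
have [bF bFspec] := all_sig (fun l => cid (fin_pattern l)).
have [aF aFspec] := all_sig (fun l => all_sig (fun S => cid (bFspec l S))).
pose ord F (s : 'I_k -> A) i := in_list_ord F (s i).
exists (fun i a j => uclass U (fun F => bF (size F).+1 i (in_list_ord F a) j)) => S.
pose SF F (t : 'I_k -> 'I_(size F).+1) :=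
  exists s, S s /\ (forall i, in_list (s i) F) /\ ord F s = t.
exists (fun j => uclass U (fun F => aF (size F).+1 (SF F) j)) => s.
have SF_S F : (forall i, in_list (s i) F) -> (SF F (ord F s) <-> S s).
  move=> sF; split=> [[s' [Ss' [s'F e]]]|Ss]; last by exists s.
  rewrite (_ : s = s') //; apply: funext => i.
  by apply: (in_list_ord_inj (sF i) (s'F i)); rewrite -/(ord F s' i) e.
have s_ae : U (fun F => forall i, in_list (s i) F).
  apply: (filterS _ (U_cofinal [seq s i | i <- enum 'I_k])) => F sF i.
  by apply: sF; apply: in_list_map; rewrite mem_enum.
rewrite (_ : pvalue _ _ s = fun x =>
    uclass U (fun F => pvalue (aF (size F).+1 (SF F)) (bF (size F).+1) (ord F s) x)); last first.
  by apply: funext => -[j|[i j]].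
rewrite los_psat //.
split=> [H|Ss].
  apply: (@filter_const _ U); apply: (filterS2 _ _ H s_ae) => F /aFspec SFs sF.
  exact/(SF_S F sF).
by apply: (filterS _ s_ae) => F sF; apply/aFspec/(SF_S F sF).
Qed.

Lemma ip_pattern_compactness (L : signature) (T : theory L) (N : structure L)
    (K : Type) (kk : K -> nat) (Ps : forall m, pformula L (kk m)) :
  model T N -> (forall m l, ip_pattern (Ps m) N 'I_l) ->
  forall A : Type, exists N' : structure L, model T N' /\ forall m, ip_pattern (Ps m) N' A.
Proof.
move=> NT fin_pattern A.
pose cone (F0 : seq A) F := forall x, in_list x F0 -> in_list x F.
have cone_filter : ProperFilter (filter_from setT cone).
  apply: filter_from_proper => [|F0 _]; last by exists F0.
  apply: filter_fromT_filter => [|F0 F1]; first by exists [::].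
  by exists (F0 ++ F1) => F HF; split=> x Hx; apply: HF; rewrite in_list_cat; [left|right].
have [U [U_ultra coneU]] := ultraFilterLemma cone_filter.
exists (ultrapower N U); split; first exact: ultrapower_model.
move=> m; apply: ip_pattern_ultrapower => // F0.
exact/coneU/in_filter_from.
Qed.

Section FinitePattern.
Variables (L : signature) (k : nat) (P : pformula L k) (l : nat).

Definition pbvars : finType := {i : 'I_k & ('I_l * 'I_(pny P i))%type}.

Definition bfun (M : Type) (u : pbvars -> M) : forall i, 'I_l -> 'I_(pny P i) -> M :=
  fun i t j => u (existT _ i (t, j)).

(* [ip_pattern P M 'I_l] made first-order: the sets [S] of index tuples range
   over a finite type. *)
Definition finite_pattern (M : structure L) (u : pbvars -> M) :=
  forall S : {set {ffun 'I_k -> 'I_l}}, exists a : 'I_(pnx P) -> M,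
    forall s : {ffun 'I_k -> 'I_l}, s \in S <-> psat P (pvalue a (bfun u) s).

Lemma ip_pattern_finite (M : structure L) :
  ip_pattern P M 'I_l <-> exists u : pbvars -> M, finite_pattern u.
Proof.
split=> [[b Hb]|[u Hu]].
  exists (fun y => b (tag y) (tagged y).1 (tagged y).2) => S.
  have [a Ha] := Hb (fun s => finfun s \in S); exists a => s.
  by rewrite Ha ffunK.
exists (bfun u) => S; have [a Ha] := Hu [set s : {ffun _} | `[< S s >]]; exists a => s.
have fs : (finfun s : _ -> _) = s by apply: funext => i; rewrite ffunE.
by have := Ha (finfun s); rewrite inE asboolE fs => ->.
Qed.

Definition pvalue_at (s : {ffun 'I_k -> 'I_l}) (x : pvars P) : (pbvars + 'I_(pnx P))%type :=
  match x with inl j => inr j | inr p => inl (existT _ (tag p) (s (tag p), tagged p)) end.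

Lemma udefinable_finite_pattern :
  udefinable (fun M (_ : void -> M) => exists u : pbvars -> M, finite_pattern u).
Proof.
have realize (S : {set {ffun 'I_k -> 'I_l}}) : udefinable (fun M (w : (pbvars + 'I_(pnx P)) -> M) =>
    forall s, if s \in S then psat P (w \o pvalue_at s) else ~ psat P (w \o pvalue_at s)).
  apply: udefinable_forall => s; case: (s \in S).
    exact: udefinable_comp (udefinable_psat P).
  exact/udefinable_neg/udefinable_comp/udefinable_psat.
have := udefinable_exists (I := void) (udefinable_comp inr
  (udefinable_forall (fun S => udefinable_exists (realize S)))).
have pvalueE (M : Type) (u : pbvars -> M) a s :
    (fun x => match x with inl y => u y | inr j => a j end) \o pvalue_at s = pvalue a (bfun u) s.
  by apply: funext => -[j|[i j]].
apply: udefinable_ext => M w /=.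
split=> -[u Hu]; exists u => S; have [a Ha] := Hu S; exists a => s; move: (Ha s); rewrite pvalueE.
  by case: (s \in S) => H; split=> // /H.
by case: (s \in S) => H; [apply/H|move/H].
Qed.

End FinitePattern.

Lemma ip_pattern_transfer (L : signature) (T : theory L) (N1 N2 : structure L) k
    (P : pformula L k) l :
  complete_theory T -> model T N1 -> model T N2 -> ip_pattern P N1 'I_l -> ip_pattern P N2 'I_l.
Proof.
move=> [_ [_ T_complete]] N1T N2T; rewrite !ip_pattern_finite.
have [psi [psi_sentence psiE]] := udefinable_sentence (udefinable_finite_pattern P l).
case: (carrier_inhabited N1) => x1; case: (carrier_inhabited N2) => x2.
case: (T_complete _ psi_sentence) => [psi_T|npsi_T] H.
  by apply/(psiE N2 (fun _ => x2)); exact: psi_T.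
by case: (npsi_T N1 N1T (fun _ => x1)); apply/psiE.
Qed.

(** * The generic hypergraph *)

Lemma perm_of_same_range (K : nat) (W : Type) (z z' : 'I_K -> W) :
  injective z -> injective z' -> (forall v, (exists i, z i = v) <-> (exists i, z' i = v)) ->
  exists s : {perm 'I_K}, forall i, z' i = z (s i).
Proof.
move=> z_inj z'_inj same_range.
pose f i := if [pick j | `[< z j = z' i >]] is Some j then j else i.
have fP i : z (f i) = z' i.
  rewrite /f; case: pickP => [j /asboolP //|none].
  have [j Hj] : exists j, z j = z' i by apply/same_range; exists i.
  by move: (none j); rewrite asboolT.
have f_inj : injective f by move=> i j e; apply: z'_inj; rewrite -fP e fP.
by exists (perm f_inj) => i; rewrite permE fP.
Qed.

(* The generic k-hypergraph on [nat]: the vertex [y] "requests" the finite family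
   of finite sets coded by the 2-adic valuation of [y], and a k-set is an edge
   iff its maximum [y] requested the rest of it.  Every request is made by
   arbitrarily large vertices, which gives the extension property. *)
Section GenericHypergraph.
Variable K : nat.

Definition request (n : nat) : option (seq (seq nat)) := unpickle (logn 2 n).

Lemma request_unbounded (D : seq (seq nat)) B : exists y, B < y /\ request y = Some D.
Proof.
exists (B.*2.+1 * 2 ^ pickle D); split.
  apply: leq_trans (_ : B.*2.+1 <= _); first by rewrite ltnS -addnn leq_addr.
  by rewrite leq_pmulr // expn_gt0.
by rewrite /request logn_Gauss ?pfactorK ?pickleK // coprime2n /= odd_double.
Qed.

Definition coded_edge (B : nat -> Prop) :=
  exists y, B y /\ (forall v, B v -> v <= y) /\
    exists D, request y = Some D /\ exists d, d \in D /\ forall v, v \in d <-> (B v /\ v <> y).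

Lemma coded_edge_ext (B B' : nat -> Prop) :
  (forall v, B v <-> B' v) -> coded_edge B -> coded_edge B'.
Proof.
move=> BB' [y [By [y_max [D [RD [d [dD Hd]]]]]]]; exists y; split; first exact/BB'.
split; first by move=> v /BB'; exact: y_max.
by exists D; split=> //; exists d; split=> // v; rewrite Hd BB'.
Qed.

Lemma coded_edgeE (B : nat -> Prop) y : B y -> (forall v, B v -> v <= y) ->
  coded_edge B <->
  exists D, request y = Some D /\ exists d, d \in D /\ forall v, v \in d <-> (B v /\ v <> y).
Proof.
move=> By y_max; split=> [[y' [By' [y'_max H]]]|H]; last by exists y.
by rewrite (_ : y = y') //; apply/eqP; rewrite eqn_leq y'_max // y_max.
Qed.

Definition gen_edge (z : 'I_K -> nat) := injective z /\ coded_edge (fun v => exists i, z i = v).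

Lemma gen_edge_hypergraph : is_khypergraph gen_edge.
Proof.
split=> [a []//|z s [z_inj Ez]]; split; first by move=> i j /z_inj /perm_inj.
apply: coded_edge_ext Ez => v; split=> [[i <-]|[i <-]]; last by exists (s i).
by exists (s^-1 i)%g => /=; rewrite permKV.
Qed.

Section PartialIso.
Variables (W : Type) (Rw : ('I_K -> W) -> Prop).
Hypothesis Rw_hypergraph : is_khypergraph Rw.

Definition partial_iso (ps : seq (W * nat)) :=
  (forall a b a' b', in_list (a, b) ps -> in_list (a', b') ps -> (a = a' <-> b = b')) /\
  (forall z w, (forall i, in_list (z i, w i) ps) -> (Rw z <-> gen_edge w)).

Fixpoint sublists (l : seq W) : seq (seq W) :=
  if l is x :: l' then sublists l' ++ map (cons x) (sublists l') else [:: [::]].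

Lemma sublists_complete l (B : W -> Prop) : (forall v, B v -> in_list v l) ->
  exists d, in_list d (sublists l) /\ forall v, in_list v d <-> B v.
Proof.
elim: l B => [|x l IH] B Bl /=.
  by exists [::]; split; [left|move=> v; split=> // /Bl].
have Bl' v : B v /\ v <> x -> in_list v l.
  by move=> [/Bl [e|//] nvx]; case: nvx.
have [d [dl Hd]] := IH _ Bl'.
have [Bx|nBx] := pselect (B x).
  exists (x :: d); split; first by rewrite in_list_cat; right; apply/in_list_mapP; exists d.
  move=> v /=; rewrite Hd; split=> [[<-|[]]|Bv] //.
  by have [<-|nxv] := pselect (x = v); [left|right; split=> // e; apply: nxv].
exists d; split; first by rewrite in_list_cat; left.
by move=> v; rewrite Hd; split=> [[]|Bv] //; split=> // e; rewrite e in Bv.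
Qed.

Lemma sublists_sub l d : in_list d (sublists l) -> forall v, in_list v d -> in_list v l.
Proof.
elim: l d => [|x l IH] d /=; first by case=> // <-.
rewrite in_list_cat => -[/IH H v /H|/in_list_mapP [d' [H1 <-]] v /= [->|Hv]]; [by right|by left|].
by right; exact: IH H1 v Hv.
Qed.

Definition partner (ps : seq (W * nat)) (a : W) : nat :=
  if pselect (exists b, in_list (a, b) ps) is left H then projT1 (cid H) else 0.

Lemma partnerP ps a b : in_list (a, b) ps -> in_list (a, partner ps a) ps.
Proof.
move=> H; rewrite /partner; case: pselect => [H'|[]]; last by exists b.
by case: (cid _).
Qed.

Lemma in_list_cons_pair (a : W) b x y (ps : seq (W * nat)) :
  in_list (a, b) ((x, y) :: ps) <-> (a = x /\ b = y) \/ in_list (a, b) ps.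
Proof. by split=> [[[-> ->]|H]|[[-> ->]|H]]; [left|right|left|right]. Qed.

Definition max_target (ps : seq (W * nat)) := foldr (fun q m => maxn q.2 m) 0 ps.

Lemma max_targetP ps a b : in_list (a, b) ps -> b <= max_target ps.
Proof.
elim: ps => [|[a' b'] ps IH] //= [[_ <-]|/IH H]; first by rewrite leq_maxl.
by rewrite leq_max H orbT.
Qed.

Section Forth.
Variables (ps : seq (W * nat)) (x : W).
Hypothesis ps_iso : partial_iso ps.
Hypothesis x_new : ~ exists b, in_list (x, b) ps.

Definition extends_to_edge (d : seq W) := exists z : 'I_K -> W,
  injective z /\ Rw z /\ forall v, (exists i, z i = v) <-> (v = x \/ in_list v d).

(* The images of the sets [d] of old vertices that form an edge together with [x]. *)
Definition forth_request :=
  [seq map (partner ps) d | d <- sublists (map fst ps) & `[< extends_to_edge d >]].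

Variable y : nat.
Hypothesis y_big : max_target ps < y.
Hypothesis y_request : request y = Some forth_request.

Lemma in_list_dom a : in_list a (map fst ps) <-> exists b, in_list (a, b) ps.
Proof.
rewrite in_list_mapP; split=> [[[a' b'] [H1 /= <-]]|[b' H]]; first by exists b'.
by exists (a, b').
Qed.

Lemma forth_pairs a b a' b' : in_list (a, b) ((x, y) :: ps) -> in_list (a', b') ((x, y) :: ps) ->
  (a = a' <-> b = b').
Proof.
have [ps_pairs _] := ps_iso.
have old_lt a1 b1 : in_list (a1, b1) ps -> b1 < y.
  by move=> /max_targetP H; apply: leq_ltn_trans H y_big.
move=> /in_list_cons_pair [[-> ->]|H1] /in_list_cons_pair [[-> ->]|H2] //; last exact: ps_pairs.
- split=> [e|e]; first by case: x_new; exists b'; rewrite e.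
  by move: (old_lt _ _ H2); rewrite -e ltnn.
- split=> [e|e]; first by case: x_new; exists b; rewrite -e.
  by move: (old_lt _ _ H1); rewrite e ltnn.
Qed.

Section NewEdge.
Variables (z : 'I_K -> W) (w : 'I_K -> nat) (i0 : 'I_K).
Hypothesis zw : forall i, in_list (z i, w i) ((x, y) :: ps).
Hypothesis z_i0 : z i0 = x.
Hypothesis z_inj : injective z.

Lemma new_vertex i : z i = x <-> w i = y.
Proof. exact: forth_pairs (zw i) (or_introl erefl). Qed.

Lemma old_vertex i : z i <> x -> in_list (z i, w i) ps.
Proof. by case/in_list_cons_pair: (zw i) => [[]|]. Qed.

Lemma partner_old i : z i <> x -> partner ps (z i) = w i.
Proof.
move=> nzi; have [ps_pairs _] := ps_iso.
by apply/(ps_pairs _ _ _ _ (partnerP (old_vertex nzi)) (old_vertex nzi)).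
Qed.

Lemma gen_edge_new : gen_edge w <->
  exists d', d' \in forth_request /\ forall v, v \in d' <-> ((exists i, w i = v) /\ v <> y).
Proof.
have w_inj : injective w by move=> i j e; apply/z_inj/(forth_pairs (zw i) (zw j)).
have w_i0 : w i0 = y by apply/new_vertex.
have w_max v : (exists i, w i = v) -> v <= y.
  move=> [i <-]; have [/new_vertex -> //|nzi] := pselect (z i = x).
  exact/ltnW/(leq_ltn_trans (max_targetP (old_vertex nzi))).
rewrite /gen_edge (coded_edgeE (ex_intro _ i0 w_i0) w_max) y_request.
by split=> [[_ [D [[<-] H]]]|H] //; split=> //; exists forth_request.
Qed.

Lemma edge_new_of_Rw : Rw z ->
  exists d', d' \in forth_request /\ forall v, v \in d' <-> ((exists i, w i = v) /\ v <> y).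
Proof.
move=> Rz.
have old_dom v : (exists i, z i = v /\ v <> x) -> in_list v (map fst ps).
  by move=> [i [<- nzi]]; apply/in_list_dom; exists (w i); exact: old_vertex.
have [d [d_sub Hd]] := sublists_complete old_dom.
exists (map (partner ps) d); split.
  apply/mem_map_filter; exists d; split=> //; split=> //; apply/asboolP.
  exists z; split=> //; split=> // v; rewrite Hd; split=> [[i <-]|[->|[i [<- _]]]].
  - by have [->|nzi] := pselect (z i = x); [left|right; exists i].
  - by exists i0.
  - by exists i.
move=> v; rewrite mem_map_in_list; split=> [[a [/Hd [i [<- nzi]] ->]]|[[i <-] nwy]].
  by rewrite partner_old //; split; [exists i|move/new_vertex].
have nzi : z i <> x by move/new_vertex.
by exists (z i); split; [apply/Hd; exists i|rewrite partner_old].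
Qed.

Lemma Rw_of_edge_new d' : d' \in forth_request ->
  (forall v, v \in d' <-> ((exists i, w i = v) /\ v <> y)) -> Rw z.
Proof.
have [ps_pairs _] := ps_iso.
move=> /mem_map_filter [d [d_sub [/asboolP [z' [z'_inj [Rz' z'_range]]] ->]]] Hd'.
have old_in v : in_list v d -> exists b, in_list (v, b) ps.
  by move=> vd; apply/in_list_dom; exact: sublists_sub d_sub v vd.
have same_range v : (exists i, z i = v) <-> (exists i, z' i = v).
  rewrite z'_range; split=> [[i <-]|[->|vd]]; last 2 first.
  - by exists i0.
  - have [b vb] := old_in v vd.
    have : partner ps v \in map (partner ps) d by apply/mem_map_in_list; exists v.
    move/Hd' => [[i wi] nwy]; have nzi : z i <> x by move/new_vertex; rewrite wi.
    by exists i; apply/(ps_pairs _ _ _ _ (old_vertex nzi) (partnerP vb)); rewrite wi.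
  have [->|nzi] := pselect (z i = x); [by left|right].
  have : w i \in map (partner ps) d by apply/Hd'; split; [exists i|move/new_vertex].
  move/mem_map_in_list => [a [ad pa]]; have [b ab] := old_in a ad.
  by rewrite (_ : z i = a) //; apply/(ps_pairs _ _ _ _ (old_vertex nzi) (partnerP ab)).
have [s Hs] := perm_of_same_range z'_inj z_inj (fun v => iff_sym (same_range v)).
by rewrite (_ : z = z' \o s); [exact: (proj2 Rw_hypergraph)|apply: funext => i; rewrite Hs].
Qed.

End NewEdge.

Lemma forth_edges z w : (forall i, in_list (z i, w i) ((x, y) :: ps)) -> (Rw z <-> gen_edge w).
Proof.
have [_ ps_edges] := ps_iso.
move=> zw; have [[i0 z_i0]|nzx] := pselect (exists i0, z i0 = x); last first.
  apply: ps_edges => i; case/in_list_cons_pair: (zw i) => [[zx _]|//].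
  by case: nzx; exists i.
have [z_inj|nz_inj] := pselect (injective z); last first.
  split=> [/(proj1 Rw_hypergraph) //|[w_inj _]]; case: nz_inj => i j e.
  by apply/w_inj/(forth_pairs (zw i) (zw j)).
rewrite (gen_edge_new zw z_i0 z_inj); split; first exact: (edge_new_of_Rw zw z_i0 z_inj).
by move=> [d' [Hd' Hv]]; exact: (Rw_of_edge_new zw z_i0 z_inj Hd' Hv).
Qed.

End Forth.

Lemma forth ps x : partial_iso ps -> exists y, partial_iso ((x, y) :: ps).
Proof.
move=> ps_iso; have [ps_pairs ps_edges] := ps_iso.
have [[b xb]|x_new] := pselect (exists b, in_list (x, b) ps).
  exists b; split=> [a1 b1 a2 b2 /in_list_cons_pair H1 /in_list_cons_pair H2|z w zw].
    by apply: ps_pairs; [case: H1 => [[-> ->]|]|case: H2 => [[-> ->]|]].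
  by apply: ps_edges => i; case/in_list_cons_pair: (zw i) => [[-> ->]|].
have [y [y_big y_request]] := request_unbounded (forth_request ps x) (max_target ps).
exists y; split; first exact: forth_pairs.
exact: forth_edges.
Qed.

Lemma forth_choice : exists f : seq (W * nat) -> W -> nat,
  forall ps x, partial_iso ps -> partial_iso ((x, f ps x) :: ps).
Proof.
have step ps x : exists y, partial_iso ps -> partial_iso ((x, y) :: ps).
  by have [/(forth x) [y]|] := pselect (partial_iso ps); [exists y|exists 0].
by exists (fun ps x => projT1 (cid (step ps x))) => ps x; exact: projT2 (cid (step ps x)).
Qed.

End PartialIso.

Definition swap (q : nat * nat) := (q.2, q.1).

Lemma partial_iso_swap ps : partial_iso gen_edge ps -> partial_iso gen_edge (map swap ps).
Proof.
have in_swap a b : in_list (a, b) (map swap ps) <-> in_list (b, a) ps.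
  by rewrite in_list_mapP; split=> [[[b' a'] [H [<- <-]]]|H] //; exists (b, a).
move=> [ps_pairs ps_edges]; split=> [a b a' b' /in_swap H1 /in_swap H2|z w H].
  by have := ps_pairs _ _ _ _ H1 H2; tauto.
by rewrite (ps_edges w z) // => i; apply/in_swap.
Qed.

Lemma back_choice : exists f : seq (nat * nat) -> nat -> nat,
  forall ps y, partial_iso gen_edge ps -> partial_iso gen_edge ((f ps y, y) :: ps).
Proof.
have [f Hf] := forth_choice gen_edge_hypergraph.
exists (fun ps => f (map swap ps)) => ps y /partial_iso_swap /(Hf _ y) /partial_iso_swap /=.
by rewrite mapK //; case.
Qed.

Hypothesis K_gt0 : 0 < K.

Lemma partial_iso_nil (W : Type) (Rw : ('I_K -> W) -> Prop) : partial_iso Rw [::].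
Proof. by split=> // z w /(_ (Ordinal K_gt0)). Qed.

Lemma gen_universal (V : finType) (R : ('I_K -> V) -> Prop) : is_khypergraph R ->
  exists g : V -> nat, injective g /\ forall a, R a <-> gen_edge (g \o a).
Proof.
move=> R_hypergraph; have [f Hf] := forth_choice R_hypergraph.
pose build := foldr (fun v ps => (v, f ps v) :: ps) [::].
have build_iso l : partial_iso R (build l).
  by elim: l => [|v l IH] /=; [exact: partial_iso_nil|exact: Hf].
have build_dom l v : v \in l -> exists b, in_list (v, b) (build l).
  elim: l => [|u l IH] //=; rewrite in_cons => /orP [/eqP ->|/IH [b Hb]].
    by exists (f (build l) u); left.
  by exists b; right.
pose ps := build (enum V); have [ps_pairs ps_edges] := build_iso (enum V).
have gP v : in_list (v, partner ps v) ps.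
  by have [b Hb] := build_dom (enum V) v (mem_enum _ _); exact: partnerP Hb.
exists (partner ps); split=> [v v' e|a]; last by apply: ps_edges => i; exact: gP.
by apply/(ps_pairs _ _ _ _ (gP v) (gP v')); rewrite e.
Qed.

(* Alternately adding [n] to the domain and to the range of a finite partial
   isomorphism yields an increasing chain whose union is an automorphism. *)
Lemma gen_back_and_forth ps0 : partial_iso gen_edge ps0 ->
  exists sigma : nat -> nat, bijective sigma /\
    (forall a b, in_list (a, b) ps0 -> sigma a = b) /\
    forall z : 'I_K -> nat, gen_edge z <-> gen_edge (sigma \o z).
Proof.
move=> ps0_iso.
have [f Hf] := forth_choice gen_edge_hypergraph; have [g Hg] := back_choice.
pose stage := fix stage n := if n is n'.+1 then
  let ps1 := (n', f (stage n') n') :: stage n' in (g ps1 n', n') :: ps1 else ps0.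
have stage_iso n : partial_iso gen_edge (stage n).
  by elim: n => [|n IH] //=; apply/Hg/Hf.
have stage_mono n m q : n <= m -> in_list q (stage n) -> in_list q (stage m).
  move=> nm Hq; elim: m nm => [|m IH]; first by rewrite leqn0 => /eqP <-.
  by rewrite leq_eqVlt => /orP [/eqP <- //|]; rewrite ltnS => /IH H /=; right; right.
pose sigma x := f (stage x) x.
pose sigma' y := g ((y, f (stage y) y) :: stage y) y.
have sigmaP x : in_list (x, sigma x) (stage x.+1) by right; left.
have sigma'P y : in_list (sigma' y, y) (stage y.+1) by left.
have stage_eq n1 n2 a b a' b' : in_list (a, b) (stage n1) -> in_list (a', b') (stage n2) ->
    (a = a' <-> b = b').
  move=> H1 H2; have [pairs _] := stage_iso (maxn n1 n2).
  by apply: pairs; [apply: stage_mono H1; rewrite leq_maxl|apply: stage_mono H2; rewrite leq_maxr].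
exists sigma; split; [exists sigma'|split].
- by move=> x; apply/(stage_eq _ _ _ _ _ _ (sigma'P (sigma x)) (sigmaP x)).
- by move=> y; apply/(stage_eq _ _ _ _ _ _ (sigmaP (sigma' y)) (sigma'P y)).
- by move=> a b ab; apply/(stage_eq _ 0 _ _ _ _ (sigmaP a) ab).
move=> z; have [_ edges] := stage_iso (\max_(i < K) (z i).+1).
by apply: edges => i; apply: stage_mono (sigmaP (z i)); exact: (leq_bigmax i).
Qed.

Definition gen_hypergraph : structure (hypergraph_sig K) :=
  @Structure (hypergraph_sig K) nat (inhabits 0) (fun f : Empty_set => match f with end)
    (fun _ z => gen_edge z).

Lemma gen_hypergraph_generic : generic_hypergraph gen_hypergraph.
Proof.
split; first exact: gen_edge_hypergraph.
split; first by exists id.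
split; first by move=> V R; exact: gen_universal.
move=> A p [s As] p_inj p_edges.
pose ps0 := map (fun x => (x, p x)) s.
have ps0P a b : in_list (a, b) ps0 -> A a /\ b = p a.
  by move/in_list_mapP => [x [xs [<- <-]]]; split=> //; apply/As.
have ps0_iso : partial_iso gen_edge ps0.
  split=> [a b a' b' /ps0P [Aa ->] /ps0P [Aa' ->]|z w zw]; first by split=> [->//|]; exact: p_inj.
  rewrite (_ : w = p \o z); last by apply: funext => i; have [_ ->] := ps0P _ _ (zw i).
  by apply: (p_edges z) => i; have [] := ps0P _ _ (zw i).
have [sigma [sigma_bij [sigma_p sigma_aut]]] := gen_back_and_forth ps0_iso.
exists sigma; split=> //; split=> // x Ax; apply: sigma_p.
by apply/in_list_mapP; exists x; split=> //; apply/As.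
Qed.

End GenericHypergraph.

(** * Traced relations *)

Definition ocons (T : Type) (k : nat) (v : T) (w : 'I_k -> T) (p : 'I_k.+1) : T :=
  if unlift ord0 p is Some i then w i else v.

Lemma ocons0 (T : Type) k (v : T) (w : 'I_k -> T) : ocons v w ord0 = v.
Proof. by rewrite /ocons unlift_none. Qed.

Lemma oconsS (T : Type) k (v : T) (w : 'I_k -> T) i : ocons v w (lift ord0 i) = w i.
Proof. by rewrite /ocons liftK. Qed.

Lemma ocons_eta (T : Type) k (a : 'I_k.+1 -> T) : ocons (a ord0) (fun i => a (lift ord0 i)) = a.
Proof. by apply: funext => p; rewrite /ocons; case: unliftP => [i ->|->]. Qed.

Lemma ocons_comp (T T' : Type) (g : T -> T') k (v : T) (w : 'I_k -> T) :
  g \o ocons v w = ocons (g v) (g \o w).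
Proof. by apply: funext => p; rewrite /ocons /=; case: unlift. Qed.

Lemma ocons_inj (T : Type) k (v v' : T) (w w' : 'I_k -> T) :
  ocons v w = ocons v' w' -> v = v' /\ w = w'.
Proof.
move=> e; split; first by rewrite -(ocons0 v w) e ocons0.
by apply: funext => i; rewrite -(oconsS v w) e oconsS.
Qed.

Lemma nth_inj (s : seq nat) : uniq s -> injective (fun j : 'I_(size s) => nth 0 s j).
Proof. by move=> s_uniq i j /eqP; rewrite nth_uniq // => /eqP /val_inj. Qed.

Lemma nth_surj (s : seq nat) v : v \in s -> exists j : 'I_(size s), v = nth 0 s j.
Proof. by move=> vs; exists (Ordinal (etrans (index_mem v s) vs)); rewrite /= nth_index. Qed.

(* The first coordinate with
   the parameters becomes the x-part of a partitioned formula, coordinate [i + 1]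
   the y_i-part. *)
Section TracedRelation.
Variables (L : signature) (N : structure L) (M : Type) (J : finType) (k : nat).
Variables (f : J -> M -> N) (idx : J -> 'I_k.+1) (phi : formula L) (e : nat -> N).

Definition traced (a : 'I_k.+1 -> M) := sat (tuple_env (fun c => f c (a (idx c))) e) phi.

Definition traced_x :=
  [seq pos c | c <- enum J & idx c == ord0] ++ [seq #|J| + p | p <- iota 0 (maxvar phi).+1].

Definition traced_y (i : 'I_k) := [seq pos c | c <- enum J & idx c == lift ord0 i].

Lemma mem_traced_x v : v \in traced_x <->
  (exists c, idx c = ord0 /\ v = pos c) \/ (#|J| <= v <= #|J| + maxvar phi).
Proof.
rewrite mem_cat; split=> [/orP [/mapP [c]|/mapP [p]]|[[c [c0 ->]]|/andP [Jv vB]]].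
- by rewrite mem_filter => /andP [/eqP c0 _] ->; left; exists c.
- by rewrite mem_iota add0n => /andP [_ pB] ->; right; rewrite leq_addr leq_add2l -ltnS.
- by apply/orP; left; apply: map_f; rewrite mem_filter c0 eqxx mem_enum.
apply/orP; right; apply/mapP; exists (v - #|J|); last by rewrite subnKC.
by rewrite mem_iota add0n /= ltnS leq_subLR.
Qed.

Lemma mem_traced_y i v : v \in traced_y i <-> exists c, idx c = lift ord0 i /\ v = pos c.
Proof.
split; first by move/mapP=> [c]; rewrite mem_filter => /andP [/eqP c_i _] ->; exists c.
by move=> [c [c_i ->]]; apply: map_f; rewrite mem_filter c_i eqxx mem_enum.
Qed.

Lemma traced_vars_inj : injective (fun x : ('I_(size traced_x) +
    {i : 'I_k & 'I_(size (traced_y i))})%type =>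
  match x with inl j => nth 0 traced_x j | inr p => nth 0 (traced_y (tag p)) (tagged p) end).
Proof.
have pos_small (c : J) p : pos c <> #|J| + p.
  by move=> e0; move: (pos_lt c); rewrite e0 ltnNge leq_addr.
apply: (@vars_inj k _ (fun i => size (traced_y i)) (fun j => nth 0 traced_x j)
  (fun i j => nth 0 (traced_y i) j)) => [|i|j i j'|i i' j j' nii].
- apply: nth_inj; rewrite cat_uniq; apply/and3P; split.
  + by rewrite map_inj_uniq; [exact/filter_uniq/enum_uniq|exact: pos_inj].
  + by apply/hasP => -[v /mapP [p _ ->] /mapP [c _ /esym]]; apply: pos_small.
  + by rewrite map_inj_uniq ?iota_uniq // => a b /addnI.
- by apply: nth_inj; rewrite map_inj_uniq; [exact/filter_uniq/enum_uniq|exact: pos_inj].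
- have /mem_traced_x [[c [c0 ->]]|/andP [Jv _]] := mem_nth 0 (ltn_ord j);
    have /mem_traced_y [c' [c'_i ->]] := mem_nth 0 (ltn_ord j').
    move/pos_inj => cc'; move: c0; rewrite cc' c'_i => /eqP.
    by rewrite eq_sym (negbTE (neq_lift _ _)).
  by move=> e0; move: Jv; rewrite e0 leqNgt pos_lt.
- have /mem_traced_y [c [c_i ->]] := mem_nth 0 (ltn_ord j).
  have /mem_traced_y [c' [c'_i' ->]] := mem_nth 0 (ltn_ord j').
  by move/pos_inj => cc'; apply: nii; apply: (@lift_inj _ ord0); rewrite -c_i -c'_i' cc'.
Qed.

Lemma traced_free v : free_in v phi ->
  (exists j : 'I_(size traced_x), v = nth 0 traced_x j) \/
  (exists i (j : 'I_(size (traced_y i))), v = nth 0 (traced_y i) j).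
Proof.
move=> /free_maxvar vB; have [vJ|Jv] := ltnP v #|J|; last first.
  by left; apply: nth_surj; apply/mem_traced_x; right; rewrite Jv (leq_trans vB) ?leq_addl.
pose c := enum_val (Ordinal vJ); have pc : pos c = v by rewrite /pos /c enum_valK.
case: (unliftP ord0 (idx c)) => [i c_i|c0].
  by right; exists i; apply: nth_surj; apply/mem_traced_y; exists c.
by left; apply: nth_surj; apply/mem_traced_x; left; exists c.
Qed.

Definition traced_pformula : pformula L k :=
  @PFormula L k (size traced_x) (fun i => size (traced_y i)) (fun j => nth 0 traced_x j)
    (fun i j => nth 0 (traced_y i) j) phi traced_free traced_vars_inj.

Lemma ip_pattern_traced (A : Type) (code : (('I_k -> A) -> Prop) -> M) (elt : 'I_k -> A -> M) :
  (forall S s, traced (ocons (code S) (fun i => elt i (s i))) <-> S s) ->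
  ip_pattern traced_pformula N A.
Proof.
move=> code_spec.
exists (fun i t j => tuple_env (fun c => f c (elt i t)) e (nth 0 (traced_y i) j)) => S.
exists (fun j => tuple_env (fun c => f c (code S)) e (nth 0 traced_x j)) => s.
rewrite -code_spec /traced; apply: psatE => -[j|[i j]] /=.
  have /mem_traced_x [[c [c0 ->]]|/andP [Jv _]] := mem_nth 0 (ltn_ord j).
    by rewrite !tuple_env_pos c0 ocons0.
  by rewrite !tuple_env_big.
have /mem_traced_y [c [c_i ->]] := mem_nth 0 (ltn_ord j).
by rewrite !tuple_env_pos c_i oconsS.
Qed.

End TracedRelation.

Lemma definable_hedge (k : nat) (H : structure (hypergraph_sig k)) : definable (hedge H).
Proof.
apply: (@definable_of_udefinable _ H _ (fun M a => hedge M a)).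
by exists (@Defs.frel (hypergraph_sig k) tt (fun j => tvar _ (pos j))).
Qed.

(* The vertex [inr S] is related exactly to the tuples of [inl]-vertices indexed
   by [S]: every k-ary relation on [nat] is coded by one vertex. *)
Definition membership_structure (k : nat) : structure (hypergraph_sig k.+1) :=
  @Structure (hypergraph_sig k.+1) (nat + (('I_k -> nat) -> Prop)) (inhabits (inl 0))
    (fun f : Empty_set => match f with end)
    (fun _ z => exists S s, z = ocons (inr S) (fun i => inl (s i)) /\ S s).

Lemma hedge_membership k (S : ('I_k -> nat) -> Prop) (s : 'I_k -> nat) :
  hedge (membership_structure k) (ocons (inr S) (fun i => inl (s i))) <-> S s.
Proof.
split=> [[S' [s' [e Ss']]]|Ss]; last by exists S, s.
have [[SS'] e'] := ocons_inj e; rewrite SS'.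
by rewrite (_ : s = s') //; apply: funext => i; case: (f_equal (@^~ i) e').
Qed.

Lemma IP_of_local_trace (L : signature) (T : theory L) :
  (forall (L' : signature) (M : structure L'), theory_locally_trace_defines T M) ->
  infinite_IP T.
Proof.
move=> T_ltd k _; have [N [NT [E N_ltd]]] := T_ltd _ (membership_structure k).
have [n [f [idx [Y [_ [[phi [e HY]] HX]]]]]] := N_ltd k.+1 _ (definable_hedge _).
exists N, (pphi (traced_pformula idx phi)); split=> //.
apply: has_kIP_of_ip_pattern.
apply: (ip_pattern_traced (code := @inr nat _) (elt := fun _ => inl)) => S s.
by rewrite -hedge_membership HX HY; exact: iff_refl.
Qed.

Section CodeHypergraph.
Variables (k l : nat).

Definition code_vertex : finType := ('I_k * 'I_l + {set {ffun 'I_k -> 'I_l}})%type.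

Definition canon (S : {set {ffun 'I_k -> 'I_l}}) (s : {ffun 'I_k -> 'I_l}) :
    'I_k.+1 -> code_vertex :=
  ocons (inr S) (fun i => inl (i, s i)).

(* A finite hypergraph in which every set of k-tuples over ['I_l] is coded by a vertex. *)
Definition code_edge (z : 'I_k.+1 -> code_vertex) :=
  exists (S : {set {ffun 'I_k -> 'I_l}}) (s : {ffun 'I_k -> 'I_l}) (sg : {perm 'I_k.+1}),
    s \in S /\ z = canon S s \o sg.

Lemma canon_inj S s : injective (canon S s).
Proof.
move=> p q; rewrite /canon /ocons.
by case: (unliftP ord0 p) => [i ->|->]; case: (unliftP ord0 q) => [i' ->|->] // [->].
Qed.

Lemma code_edge_hypergraph : is_khypergraph code_edge.
Proof.
split=> [z [S [s [sg [_ ->]]]]|z s' [S [s [sg [Ss ->]]]]].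
  by apply: inj_comp; [exact: canon_inj|exact: perm_inj].
by exists S, s, (s' * sg)%g; split=> //; apply: funext => p; rewrite /= permM.
Qed.

Lemma code_edge_canon S s : code_edge (canon S s) <-> s \in S.
Proof.
split=> [[S0 [s0 [sg [Ss0 e]]]]|Ss]; last first.
  by exists S, s, 1%g; split=> //; apply: funext => p; rewrite /= perm1.
have e_at p : canon S s p = canon S0 s0 (sg p) by rewrite e.
have sg0 : sg ord0 = ord0.
  by move: (e_at ord0); rewrite /canon ocons0 /ocons; case: (unliftP ord0 (sg ord0)) => [i ->|->].
have SS0 : S = S0 by move: (e_at ord0); rewrite sg0 /canon !ocons0 => -[].
rewrite (_ : s = s0) ?SS0 //; apply/ffunP => i; move: (e_at (lift ord0 i)).
rewrite /canon oconsS /ocons; case: (unliftP ord0 (sg (lift ord0 i))) => [i' _ [-> ->] //|e0].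
by have /perm_inj := etrans e0 (esym sg0) => /eqP; rewrite eq_sym (negbTE (neq_lift _ _)).
Qed.

End CodeHypergraph.

Lemma IP_of_trace_hypergraphs (L : signature) (T : theory L) :
  (forall k : nat, 2 <= k -> forall H : structure (hypergraph_sig k), generic_hypergraph H ->
     theory_trace_defines T H) -> infinite_IP T.
Proof.
move=> T_td k k_gt0; have gen_generic := gen_hypergraph_generic (ltn0Sn k).
have [N [NT [n [tau N_td]]]] := T_td k.+1 k_gt0 _ gen_generic.
have [Y [[phi [e HY]] HX]] := N_td k.+1 _ (definable_hedge _).
pose P := traced_pformula (J := ('I_k.+1 * 'I_n)%type) fst phi.
have fin l : ip_pattern P N 'I_l.
  have [_ [_ [gen_univ _]]] := gen_generic.
  have [g [_ Hg]] := gen_univ _ _ (@code_edge_hypergraph k l).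
  apply: (ip_pattern_traced (f := fun c x => tau x c.2) (e := e)
    (code := fun S => g (inr [set s : {ffun _} | `[< S s >]])) (elt := fun i t => g (inl (i, t)))).
  move=> S s; set S' := [set s : {ffun _} | `[< S s >]].
  have -> : ocons (g (inr S')) (fun i => g (inl (i, s i))) = g \o canon S' (finfun s).
    by rewrite ocons_comp; congr ocons; apply: funext => i /=; rewrite ffunE.
  have -> : S s <-> hedge (gen_hypergraph k.+1) (g \o canon S' (finfun s)).
    by rewrite -Hg code_edge_canon inE asboolE (_ : (finfun s : _ -> _) = s) //; apply/funext/ffunE.
  rewrite HX HY; exact: iff_refl.
have [N' [N'T N'P]] := ip_pattern_compactness (Ps := fun _ : unit => P) NT (fun _ => fin) nat.
by exists N', (pphi P); split=> //; apply: has_kIP_of_ip_pattern (N'P tt).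
Qed.

Lemma local_trace_nullary (L L' : signature) (N : structure L) (M : structure L')
    (X : ('I_0 -> M) -> Prop) :
  exists (n : nat) (f : 'I_n -> M -> N) (idx : 'I_n -> 'I_0) (Y : ('I_n -> N) -> Prop),
    definable Y /\ forall a : 'I_0 -> M, X a <-> Y (fun j => f j (a (idx j))).
Proof.
case: (carrier_inhabited M) => x0; case: (carrier_inhabited N) => y0.
exists 0, (fun _ _ => y0), id, (fun _ => X (fun _ => x0)); split.
  exact: definable_of_udefinable (@udefinable_const _ 'I_0 _).
by move=> a; rewrite (_ : a = fun _ => x0) //; apply: funext => -[].
Qed.

Lemma local_trace_of_ip_pattern (L L' : signature) (N : structure L) (M : structure L') m
    (P : pformula L m.+1) (X : ('I_m.+1 -> M) -> Prop) :
  ip_pattern P N M ->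
  exists (n : nat) (f : 'I_n -> M -> N) (idx : 'I_n -> 'I_m.+1) (Y : ('I_n -> N) -> Prop),
    definable Y /\ forall a : 'I_m.+1 -> M, X a <-> Y (fun j => f j (a (idx j))).
Proof.
move=> [b Hb]; have [aX HaX] := Hb X.
pose f (c : 'I_#|pvars P|) (x : M) : N :=
  pvalue aX (fun i _ j => b i x j) (fun _ => x) (enum_val c).
pose idx (c : 'I_#|pvars P|) : 'I_m.+1 := if enum_val c is inr p then tag p else ord0.
exists #|pvars P|, f, idx, (fun w => psat P (w \o enum_rank)); split.
  exact: definable_of_udefinable (udefinable_comp _ (udefinable_psat P)).
move=> a; rewrite -HaX (_ : _ \o enum_rank = pvalue aX b a) //.
by apply: funext => x; rewrite /= /f /idx enum_rankK; case: x.
Qed.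

Lemma local_trace_of_IP (L : signature) (T : theory L) : complete_theory T -> infinite_IP T ->
  forall (L' : signature) (M : structure L'), theory_locally_trace_defines T M.
Proof.
move=> T_complete T_IP L' M.
have pat m : exists P : pformula L m.+1, exists N, model T N /\ ip_pattern P N nat.
  have [N [phi [NT /ip_pattern_of_has_kIP [P PN]]]] := T_IP m.+1 isT.
  by exists P, N.
have [Ps Ps_pat] := all_sig (fun m => cid (pat m)).
have [_ [[N0 N0T] _]] := T_complete.
have fin m l : ip_pattern (Ps m) N0 'I_l.
  have [N [NT PN]] := Ps_pat m.
  exact/(ip_pattern_transfer T_complete NT N0T)/(ip_pattern_inj val_inj).
have [N [NT NPs]] := ip_pattern_compactness N0T fin M.
exists N; split=> //; exists (fun _ => True) => -[|m] X _.
  by have [n [f [idx [Y [DY HY]]]]] := local_trace_nullary N X; exists n, f, idx, Y.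
by have [n [f [idx [Y [DY HY]]]]] := local_trace_of_ip_pattern X (NPs m); exists n, f, idx, Y.
Qed.

(** * Quantifier-free types in the generic hypergraph *)

Section Automorphism.
Variables (K : nat) (H : structure (hypergraph_sig K)) (sg : H -> H).
Hypothesis sg_bij : bijective sg.
Hypothesis sg_edge : forall z, hedge H z <-> hedge H (sg \o z).

Lemma eval_aut (E : nat -> H) t : eval_term (sg \o E) t = sg (eval_term E t).
Proof. by case: t => [v|[]]. Qed.

Lemma sat_aut phi (E : nat -> H) : sat E phi <-> sat (sg \o E) phi.
Proof.
have [sg' sgK sg'K] := sg_bij.
elim: phi E => [t u|[] ts|p IH|p IHp q IHq|x p IH] E /=.
- by rewrite !eval_aut; split=> [->//|]; exact: (can_inj sgK).
- have args : sg \o (fun j => eval_term E (ts j)) = (fun j => eval_term (sg \o E) (ts j)).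
    by apply: funext => j /=; rewrite eval_aut.
  by have := sg_edge (fun j => eval_term E (ts j)); rewrite args.
- by rewrite IH.
- by rewrite IHp IHq.
- have updE v : sg \o upd E x v = upd (sg \o E) x (sg v).
    by apply: funext => w; rewrite /upd /=; case: (w == x).
  by split=> -[v Hv]; [exists (sg v); rewrite -updE -IH|exists (sg' v); rewrite IH updE sg'K].
Qed.

End Automorphism.

Section QFType.
Variables (K : nat) (H : structure (hypergraph_sig K)) (m B : nat) (cpar : 'I_B.+1 -> H).

Definition point : finType := ('I_m + 'I_B.+1)%type.
Definition point_val (a : 'I_m -> H) (u : point) : H :=
  match u with inl i => a i | inr p => cpar p end.
Definition atom : finType := ((point * point) + {ffun 'I_K -> point})%type.

Definition qftype (a : 'I_m -> H) : {ffun atom -> bool} :=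
  [ffun al => match al with
   | inl uu => `[< point_val a (uu : point * point).1 = point_val a uu.2 >]
   | inr zz => `[< hedge H (fun i => point_val a ((zz : {ffun 'I_K -> point}) i)) >] end].

Hypothesis H_generic : generic_hypergraph H.

Lemma qftype_aut (a a' : 'I_m -> H) : qftype a = qftype a' ->
  exists sg : H -> H, [/\ bijective sg, forall z, hedge H z <-> hedge H (sg \o z) &
    forall u, sg (point_val a u) = point_val a' u].
Proof.
move=> eq_qf; have [_ [_ [_ H_homogeneous]]] := H_generic.
have eq_atom al : qftype a al = qftype a' al by rewrite eq_qf.
have same_eq u u' : point_val a u = point_val a u' <-> point_val a' u = point_val a' u'.
  by apply: asbool_eq_equiv; have := eq_atom (inl (u, u')); rewrite !ffunE.
have same_edge (zz : {ffun 'I_K -> point}) :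
    hedge H (fun i => point_val a (zz i)) <-> hedge H (fun i => point_val a' (zz i)).
  by apply: asbool_eq_equiv; have := eq_atom (inr zz); rewrite !ffunE.
pose p x := if [pick u | `[< point_val a u = x >]] is Some u then point_val a' u else x.
have pP u : p (point_val a u) = point_val a' u.
  rewrite /p; case: pickP => [u0 /asboolP /same_eq //|/(_ u)].
  by rewrite asboolT.
have A_fin : exists s, forall x, (exists u, point_val a u = x) <-> in_list x s.
  exists (map (point_val a) (enum point)) => x.
  split=> [[u <-]|/in_list_mapP [u [_ <-]]]; last by exists u.
  by apply: in_list_map; rewrite mem_enum.
have p_inj x y :
    (exists u, point_val a u = x) -> (exists u, point_val a u = y) -> p x = p y -> x = y.
  by move=> [u <-] [u' <-]; rewrite !pP => /same_eq.
have p_edge z : (forall j, exists u, point_val a u = z j) -> (hedge H z <-> hedge H (p \o z)).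
  move=> zA; have [uu Huu] := all_sig (fun j => cid (zA j)).
  have -> : z = (fun i => point_val a (finfun uu i)) by apply: funext => i; rewrite ffunE.
  rewrite same_edge (_ : p \o _ = fun i => point_val a' (finfun uu i)) //.
  by apply: funext => i /=; rewrite pP.
have [sg [sg_bij [sg_p sg_edge]]] := H_homogeneous _ p A_fin p_inj p_edge.
by exists sg; split=> // u; rewrite sg_p ?pP //; exists u.
Qed.

Lemma qftype_definable (X : ('I_m -> H) -> Prop) (psi : formula (hypergraph_sig K)) (e : nat -> H) :
  (forall a, X a <-> sat (tuple_env a e) psi) -> maxvar psi <= #|'I_m| + B ->
  (forall p, cpar p = e (#|'I_m| + p)) ->
  forall a a', qftype a = qftype a' -> X a -> X a'.
Proof.
move=> HX psiB cparE a a' /qftype_aut [sg [sg_bij sg_edge sg_val]].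
rewrite !HX (sat_aut sg_bij sg_edge) (sat_free (E' := tuple_env a' e)) // => v /free_maxvar vB.
have [vm|mv] := ltnP v #|'I_m|.
  pose c := enum_val (Ordinal vm : 'I_#|'I_m|).
  have <- : pos c = v by rewrite /pos /c enum_valK.
  by rewrite /= !tuple_env_pos (sg_val (inl c)).
have vB' : v - #|'I_m| < B.+1 by rewrite ltnS leq_subLR (leq_trans vB).
by rewrite /= !tuple_env_big //; have := sg_val (inr (Ordinal vB')); rewrite /= cparE subnKC.
Qed.
End QFType.

Section TracedEdges.
Variables (L : signature) (N : structure L) (K : nat) (H : structure (hypergraph_sig K)).
Hypothesis H_generic : generic_hypergraph H.
Variables (n : nat) (tau : H -> 'I_n -> N).
Variable edge : forall M : structure L, ('I_K * 'I_n -> M) -> Prop.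
Hypothesis tau_inj : injective tau.
Hypothesis edge_udefinable : udefinable edge.
Hypothesis hedge_traced : forall z, hedge H z <-> @edge N (fun c => tau (z c.1) c.2).

Section Atoms.
Variables (m B : nat) (cpar : 'I_B.+1 -> H).

Definition point_coord (u : point m B) (c : 'I_n) : ('I_m * 'I_n + 'I_B.+1 * 'I_n)%type :=
  match u with inl i => inl (i, c) | inr p => inr (p, c) end.

Definition atom_holds (M : structure L) (w : ('I_m * 'I_n + 'I_B.+1 * 'I_n) -> M)
    (al : atom K m B) : Prop :=
  match al with
  | inl uu => forall c, w (point_coord (uu : point m B * point m B).1 c) = w (point_coord uu.2 c)
  | inr zz => @edge M (fun q => w (point_coord ((zz : {ffun 'I_K -> point m B}) q.1) q.2))
  end.

Lemma udefinable_atom_holds al : udefinable (fun M w => atom_holds (M := M) w al).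
Proof.
case: al => [[u u']|zz] /=; last exact: udefinable_comp edge_udefinable.
have eq01 : udefinable (fun (M : structure L) (z : 'I_2 -> M) => z ord0 = z ord_max).
  by exists (fequal (tvar L (pos (ord0 : 'I_2))) (tvar L (pos (ord_max : 'I_2)))).
apply: udefinable_forall => c.
apply: udefinable_ext (udefinable_comp (fun q : 'I_2 => if q == ord0 then point_coord u c
  else point_coord u' c) eq01) => M w; exact: iff_refl.
Qed.

Definition traced_point (a : 'I_m -> H) (x : ('I_m * 'I_n + 'I_B.+1 * 'I_n)) : N :=
  match x with inl q => tau (a q.1) q.2 | inr q => tau (cpar q.1) q.2 end.

Lemma atom_holds_traced a al : atom_holds (traced_point a) al <-> qftype cpar a al.
Proof.
have coordE u c : traced_point a (point_coord u c) = tau (point_val cpar a u) c by case: u.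
rewrite ffunE; case: al => [[u u']|zz] /=; rewrite asboolE.
  split=> [h|h c]; last by rewrite !coordE h.
  by apply: tau_inj; apply: funext => c; move: (h c); rewrite !coordE.
by rewrite hedge_traced; under eq_fun do rewrite coordE.
Qed.

End Atoms.

Lemma trace_defines_of_traced_edges : trace_defines N H.
Proof.
exists n, tau => m X [psi [e HX]].
pose B := maxvar psi; pose cpar (p : 'I_B.+1) := e (#|'I_m| + p).
pose realized (t : {ffun atom K m B -> bool}) := exists a0, X a0 /\ qftype cpar a0 = t.
pose Y (M : structure L) (w : ('I_m * 'I_n + 'I_B.+1 * 'I_n) -> M) :=
  exists t, realized t /\ forall al, if t al then atom_holds w al else ~ atom_holds w al.
have Y_udefinable : udefinable Y.
  apply: udefinable_exists_fin => t; apply: udefinable_and; first exact: udefinable_const.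
  apply: udefinable_forall => al; case: (t al); first exact: udefinable_atom_holds.
  exact/udefinable_neg/udefinable_atom_holds.
exists (fun a' => Y N (fun x => match x with inl i => a' i | inr q => tau (cpar q.1) q.2 end)).
split; first exact: definable_of_udefinable_par Y_udefinable.
move=> a; split=> [Xa|[t [[a0 [Xa0 qa0]] Ht]]].
  exists (qftype cpar a); split=> [|al]; first by exists a.
  by have := atom_holds_traced cpar a al; case: (qftype cpar a al) => h; [apply/h|move/h].
have qa : qftype cpar a = t.
  apply/ffunP => al; move: (Ht al) (atom_holds_traced cpar a al).
  by case: (t al); case: (qftype cpar a al) => // h1 h2; [move/h2: h1|case: h1; apply/h2].
by apply: (qftype_definable H_generic HX (leq_addl _ _) (fun p => erefl) _ Xa0); rewrite qa0 qa.
Qed.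

End TracedEdges.

Lemma ip_pattern_coord_inj (L : signature) k (P : pformula L k) (M : structure L) (A : Type)
    (b : forall i, A -> 'I_(pny P i) -> M) :
  (forall S, exists a, forall s, psat P (pvalue a b s) <-> S s) -> forall i, injective (b i).
Proof.
move=> Hb i t1 t2 b12; have [a Ha] := Hb (fun s => s i = t1).
pose s i' := if i' == i then t2 else t1.
have : pvalue a b (fun _ => t1) = pvalue a b s.
  apply: funext => -[j|[i' j]] //=; rewrite /s.
  by case: ifP => // /eqP ii'; subst i'; rewrite b12.
move=> e; have /Ha : psat P (pvalue a b s) by rewrite -e; apply/Ha.
by rewrite /s eqxx.
Qed.

(* The vertex [v] is sent to the parameter [a_S] for the set [S] of its
   neighbourhood codes, together with the elements [b_(i, fH v)]. *)
Lemma traced_edges_of_ip_pattern (L : signature) (N : structure L) k (P : pformula L k.+1)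
    (H : structure (hypergraph_sig k.+2)) (fH : H -> nat) :
  injective fH -> ip_pattern P N nat ->
  exists (n : nat) (tau : H -> 'I_n -> N)
    (edge : forall M : structure L, ('I_k.+2 * 'I_n -> M) -> Prop),
    [/\ injective tau, udefinable edge & forall z, hedge H z <-> edge N (fun c => tau (z c.1) c.2)].
Proof.
move=> fH_inj [b Hb]; have [aS HaS] := all_sig (fun S => cid (Hb S)).
pose Sv (v : H) (s : 'I_k.+1 -> nat) := exists w, fH \o w = s /\ hedge H (ocons v w).
pose tau0 v : pvars P -> N := pvalue (aS (Sv v)) b (fun _ => fH v).
pose coord (x : pvars P) : 'I_k.+2 := if x is inr p then lift ord0 (tag p) else ord0.
exists #|pvars P|, (fun v c => tau0 v (enum_val c)),
  (fun M w => psat P (fun x => w (coord x, enum_rank x))); split.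
- move=> v v' e; have bv : b ord0 (fH v) = b ord0 (fH v').
    apply: funext => j; have := f_equal (@^~ (enum_rank (inr (existT _ ord0 j) : pvars P))) e.
    by rewrite /= !enum_rankK.
  exact: fH_inj (ip_pattern_coord_inj Hb bv).
- exact: udefinable_comp (udefinable_psat P).
move=> z; rewrite (_ : (fun x => _) = pvalue (aS (Sv (z ord0))) b (fun i => fH (z (lift ord0 i)))).
  2: by apply: funext => x; rewrite /= enum_rankK; case: x.
rewrite HaS; split=> [zE|[w [wE zw]]].
  by exists (fun i => z (lift ord0 i)); rewrite ocons_eta.
rewrite -(ocons_eta z) (_ : (fun i => _) = w) //; apply: funext => i; apply: fH_inj.
exact: (esym (f_equal (@^~ i) wE)).
Qed.

Lemma trace_hypergraphs_of_IP (L : signature) (T : theory L) : infinite_IP T ->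
  forall k : nat, 2 <= k -> forall H : structure (hypergraph_sig k), generic_hypergraph H ->
    theory_trace_defines T H.
Proof.
move=> T_IP [|[|k]] // _ H H_generic.
have [N [phi [NT /ip_pattern_of_has_kIP [P PN]]]] := T_IP k.+1 isT.
have [_ [[fH fH_inj] _]] := H_generic.
have [n [tau [edge [tau_inj edge_ud edge_traced]]]] := traced_edges_of_ip_pattern fH_inj PN.
exists N; split=> //.
exact: (trace_defines_of_traced_edges H_generic tau_inj edge_ud edge_traced).
Qed.

Theorem proposition2p15 (L : signature) (T : theory L) :
  complete_theory T ->
  ((forall (L' : signature) (M : structure L'), theory_locally_trace_defines T M)
     <-> infinite_IP T) /\
  (infinite_IP T <->
     (forall k : nat, 2 <= k ->
        forall H : structure (hypergraph_sig k), generic_hypergraph H ->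
          theory_trace_defines T H)).
Proof.
move=> T_complete; split; split.
- exact: IP_of_local_trace.
- exact: local_trace_of_IP.
- exact: trace_hypergraphs_of_IP.
- exact: IP_of_trace_hypergraphs.
Qed.
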